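(* Let $\mathbf e=(e_1,\ldots,e_r)\in\mathbb{Z}^r$ and let $J_{\mathbf e}$ be the associated Jordan totient quotient of weight $w=\sum_i ie_i$. For every real $\beta$ there is a constant $C(\mathbf e,\beta)$ such that for $x\ge2$ \[ \sum_{n\le x}J_{\mathbf e}(n)n^\beta=\mathfrak{S}_{\mathbf e}M_{\beta+w}(x)+C(\mathbf e,\beta)+O_{\mathbf e,\beta}\big(x^{\beta+w}(\log x)^{|e_1|}\big). \]
   Context: $p$ denotes a prime. For $k\ge1$, $J_k(n)=n^k\prod_{p\mid n}(1-p^{-k})$. For $\mathbf e\in\mathbb{Z}^r$, $J_{\mathbf e}(n)=\prod_{i=1}^rJ_i(n)^{e_i}$, with weight $w=\sum_i ie_i$, and $\mathfrak{S}_{\mathbf e}=\prod_p\left(1+\frac{J_{\mathbf e}(p)p^{-w}-1}{p}\right)$. For real $\gamma$, $M_\gamma(x)=x^{\gamma+1}/(\gamma+1)$ if $\gamma\ne-1$ and $M_{-1}(x)=\log x$. *)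

From Stdlib Require Import Reals Lra Lia ZArith Arith List Znumtheory Bool.
Open Scope R_scope.

Definition primeb (p : nat) : bool :=
  if prime_dec (Z.of_nat p) then true else false.

Fixpoint sum1 (N : nat) (f : nat -> R) : R :=
  match N with
  | O => 0
  | S m => sum1 m f + f (S m)
  end.

Fixpoint prod1 (N : nat) (f : nat -> R) : R :=
  match N with
  | O => 1
  | S m => prod1 m f * f (S m)
  end.

Definition Jordan (k n : nat) : R :=
  INR n ^ k *
  prod1 n (fun p => if andb (primeb p) (Nat.eqb (n mod p) 0)
                    then 1 - / (INR p ^ k) else 1).

(* e = [e_1; ...; e_r]; J_e(n) = prod_{i=1}^r J_i(n)^{e_i} *)
Definition ecoef (e : list Z) (i : nat) : Z := nth (i - 1) e 0%Z.

Definition JordanQ (e : list Z) (n : nat) : R :=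
  prod1 (length e) (fun i => powerRZ (Jordan i n) (ecoef e i)).

Definition weight (e : list Z) : Z :=
  fold_right Z.add 0%Z (map (fun i => Z.of_nat i * ecoef e i)%Z (seq 1 (length e))).

Definition SingPartial (e : list Z) (N : nat) : R :=
  prod1 N (fun p => if primeb p
                    then 1 + (JordanQ e p * powerRZ (INR p) (- weight e) - 1) / INR p
                    else 1).

Definition Mfun (g x : R) : R :=
  if Req_EM_T g (-1) then ln x else Rpower x (g + 1) / (g + 1).

Definition sum_le (x : R) (f : nat -> R) : R :=
  sum1 (Z.to_nat (Int_part x)) f.

From Stdlib Require Import Reals ZArith List.
From Stdlib Require Import Lra Lia Znumtheory Bool Classical.
Open Scope R_scope.

(* Put [G(n) = J_e(n) n^-w] and [g = beta + w]. [G] is multiplicative with [G(n) = prod_(p|n) G(p)],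
   so [G = 1 * h] with [h] supported on squarefree [d] and [h(d) = prod_(p|d) (G(p) - 1)], where
   [G(p) - 1 = -e_1 / p + O(1 / p^2)]. Hence
     [sum_(n <= x) J_e(n) n^beta = sum_d h(d) d^g sum_(m <= x/d) m^g],
   and inserting [sum_(m <= t) m^g = M_g(t) + c_g + O(t^g)] yields the main term
   [M_g(x) sum_d h(d) / d], a constant, and an error [x^(g+eps) sum_d |h(d)| d^-eps]. This last
   sum is bounded by an Euler product of size [O(eps^-|e_1|)] (Rankin's trick), and [eps = 1/ln x]
   turns the error into [x^g (ln x)^|e_1|]. The sums over [d] are first truncated to primes
   [p <= N] and then [N -> oo]; for [g < 0] the constant is the limit of the normalised sum as
   [x -> oo], which exists by the same estimate. *)

Lemma sum1_ext N f g :
  (forall n, (1 <= n <= N)%nat -> f n = g n) -> sum1 N f = sum1 N g.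
Proof.
  induction N; intros H; simpl; auto.
  rewrite IHN by (intros; apply H; lia). rewrite H by lia. reflexivity.
Qed.

Lemma sum1_add N f g : sum1 N (fun n => f n + g n) = sum1 N f + sum1 N g.
Proof. induction N; simpl; [lra | rewrite IHN; lra]. Qed.

Lemma sum1_scal N c f : sum1 N (fun n => c * f n) = c * sum1 N f.
Proof. induction N; simpl; [lra | rewrite IHN; lra]. Qed.

Lemma sum1_le N f g :
  (forall n, (1 <= n <= N)%nat -> f n <= g n) -> sum1 N f <= sum1 N g.
Proof.
  induction N; intros H; simpl; [lra |].
  pose proof (H (S N) ltac:(lia)). pose proof (IHN ltac:(intros; apply H; lia)). lra.
Qed.

Lemma sum1_le_mono N M f : (N <= M)%nat -> (forall n, 0 <= f n) -> sum1 N f <= sum1 M f.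
Proof. intros H Hf. induction H; simpl; [lra |]. specialize (Hf (S m)); lra. Qed.

Lemma prod1_ext N f g :
  (forall n, (1 <= n <= N)%nat -> f n = g n) -> prod1 N f = prod1 N g.
Proof.
  induction N; intros H; simpl; auto.
  rewrite IHN by (intros; apply H; lia). rewrite H by lia. reflexivity.
Qed.

Lemma prod1_mul N f g : prod1 N (fun n => f n * g n) = prod1 N f * prod1 N g.
Proof. induction N; simpl; [lra | rewrite IHN; ring]. Qed.

Lemma prod1_1 N : prod1 N (fun _ => 1) = 1.
Proof. induction N; simpl; auto. rewrite IHN; ring. Qed.

Lemma prod1_prod1_swap r n (f : nat -> nat -> R) :
  prod1 r (fun i => prod1 n (fun p => f i p)) = prod1 n (fun p => prod1 r (fun i => f i p)).
Proof. induction r; simpl; [symmetry; apply prod1_1 | rewrite IHr, <- prod1_mul; reflexivity]. Qed.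

Lemma prod1_ge0 N f : (forall n, (1 <= n <= N)%nat -> 0 <= f n) -> 0 <= prod1 N f.
Proof.
  induction N; intros H; simpl; [lra |].
  apply Rmult_le_pos; [apply IHN; intros |]; apply H; lia.
Qed.

Lemma prod1_le N f g :
  (forall n, (1 <= n <= N)%nat -> 0 <= f n <= g n) -> prod1 N f <= prod1 N g.
Proof.
  induction N; intros H; simpl; [lra |].
  assert (0 <= prod1 N f) by (apply prod1_ge0; intros; apply H; lia).
  pose proof (IHN ltac:(intros; apply H; lia)). pose proof (H (S N) ltac:(lia)).
  apply Rmult_le_compat; lra.
Qed.

Lemma prod1_widen n N f :
  (n <= N)%nat -> (forall k, (n < k <= N)%nat -> f k = 1) -> prod1 n f = prod1 N f.
Proof.
  intros H. induction H; intros Hf; auto. simpl.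
  rewrite IHle, (Hf (S m)) by (lia || (intros; apply Hf; lia)). ring.
Qed.

Lemma powerRZ_prod1 N f z : powerRZ (prod1 N f) z = prod1 N (fun n => powerRZ (f n) z).
Proof. induction N; simpl; [apply powerRZ_R1 | rewrite powerRZ_mult, IHN; reflexivity]. Qed.

Lemma prod1_1add_le_exp N v :
  (forall n, 0 <= v n) -> prod1 N (fun n => 1 + v n) <= exp (sum1 N v).
Proof.
  intros Hv. induction N; simpl; [rewrite exp_0; lra |]. rewrite exp_plus.
  apply Rmult_le_compat; auto.
  - apply prod1_ge0. intros n _. specialize (Hv n); lra.
  - specialize (Hv (S N)); lra.
  - apply exp_ineq1_le.
Qed.

Lemma sum1_inv_sqr_le N : sum1 N (fun n => / INR n ^ 2) <= 2.
Proof.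
  assert (Htele : forall N, sum1 (S N) (fun n => / INR n ^ 2) <= 2 - / INR (S N)).
  { induction N0; [simpl; lra |]. cbn [sum1] in *. rewrite !S_INR in *.
    assert (0 <= INR N0) by apply pos_INR.
    assert (/ (INR N0 + 1 + 1) ^ 2 <= / (INR N0 + 1) - / (INR N0 + 1 + 1)).
    { replace (/ (INR N0 + 1) - / (INR N0 + 1 + 1)) with (/ ((INR N0 + 1) * (INR N0 + 2)))
        by (field; lra).
      apply Rinv_le_contravar; [nra | simpl; nra]. }
    lra. }
  destruct N; [simpl; lra |].
  pose proof (Htele N). assert (0 < / INR (S N)) by (apply Rinv_0_lt_compat, lt_0_INR; lia).
  lra.
Qed.

Definition listprod (l : list nat) (f : nat -> R) : R :=
  fold_right (fun p acc => f p * acc) 1 l.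

Definition listprodn (l : list nat) : nat := fold_right Nat.mul 1%nat l.

Inductive sublist : list nat -> list nat -> Prop :=
  | sublist_nil : sublist nil nil
  | sublist_skip S Q q : sublist S Q -> sublist S (q :: Q)
  | sublist_take S Q q : sublist S Q -> sublist (q :: S) (q :: Q).

Fixpoint sum_sublists (Q : list nat) (f : list nat -> R) : R :=
  match Q with
  | nil => f nil
  | q :: Q' => sum_sublists Q' f + sum_sublists Q' (fun S => f (q :: S))
  end.

Lemma sum_sublists_ext Q f g :
  (forall S, sublist S Q -> f S = g S) -> sum_sublists Q f = sum_sublists Q g.
Proof.
  revert f g; induction Q; intros f g H; simpl; [apply H; constructor |].
  f_equal; apply IHQ; intros; apply H;
    [apply sublist_skip | apply sublist_take]; auto.
Qed.

Lemma sum_sublists_le Q f g :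
  (forall S, sublist S Q -> f S <= g S) -> sum_sublists Q f <= sum_sublists Q g.
Proof.
  revert f g; induction Q; intros f g H; simpl; [apply H; constructor |].
  apply Rplus_le_compat; apply IHQ; intros; apply H;
    [apply sublist_skip | apply sublist_take]; auto.
Qed.

Lemma sum_sublists_add Q f g :
  sum_sublists Q (fun S => f S + g S) = sum_sublists Q f + sum_sublists Q g.
Proof. revert f g; induction Q; intros f g; simpl; auto. rewrite !IHQ; ring. Qed.

Lemma sum_sublists_scal Q c f : sum_sublists Q (fun S => c * f S) = c * sum_sublists Q f.
Proof. revert f; induction Q; intros f; simpl; auto. rewrite !IHQ; ring. Qed.

Lemma sum_sublists_sub Q f g :
  sum_sublists Q (fun S => f S - g S) = sum_sublists Q f - sum_sublists Q g.
Proof.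
  rewrite (sum_sublists_ext _ _ (fun S => f S + (-1) * g S)) by (intros; ring).
  rewrite sum_sublists_add, sum_sublists_scal. ring.
Qed.

Lemma sum_sublists_abs Q f : Rabs (sum_sublists Q f) <= sum_sublists Q (fun S => Rabs (f S)).
Proof.
  revert f; induction Q; intros f; simpl; [lra |].
  eapply Rle_trans; [apply Rabs_triang | apply Rplus_le_compat; apply IHQ].
Qed.

Lemma sum_sublists_0 Q : sum_sublists Q (fun _ => 0) = 0.
Proof. induction Q; simpl; [reflexivity | rewrite IHQ; ring]. Qed.

Lemma sum_sublists_sum1 Q N (f : list nat -> nat -> R) :
  sum_sublists Q (fun S => sum1 N (f S)) = sum1 N (fun n => sum_sublists Q (fun S => f S n)).
Proof.
  induction N; simpl; [apply sum_sublists_0 |].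
  rewrite sum_sublists_add, IHN; reflexivity.
Qed.

Lemma sum_sublists_listprod Q u :
  sum_sublists Q (fun S => listprod S u) = listprod Q (fun p => 1 + u p).
Proof. induction Q; simpl; auto. rewrite sum_sublists_scal, IHQ. ring. Qed.

Lemma sublist_In S Q p : sublist S Q -> In p S -> In p Q.
Proof. induction 1; simpl; intuition. Qed.

Lemma sublist_NoDup S Q : sublist S Q -> NoDup Q -> NoDup S.
Proof.
  induction 1 as [| S Q q Hs IH | S Q q Hs IH]; intros Hn; inversion Hn; subst; auto.
  constructor; auto. intro Hin; apply H1; eapply sublist_In; eauto.
Qed.

Lemma listprod_ext l f g : (forall p, In p l -> f p = g p) -> listprod l f = listprod l g.
Proof.
  induction l; intros H; simpl; auto.
  rewrite H by (simpl; auto). rewrite IHl; auto. intros; apply H; simpl; auto.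
Qed.

Lemma listprod_mul l f g : listprod l (fun p => f p * g p) = listprod l f * listprod l g.
Proof. induction l; simpl; [ring | rewrite IHl; ring]. Qed.

Lemma listprod_1 l : listprod l (fun _ => 1) = 1.
Proof. induction l; simpl; auto. rewrite IHl; ring. Qed.

Lemma listprod_eq0 l f p : In p l -> f p = 0 -> listprod l f = 0.
Proof.
  induction l; simpl; intros Hin Hf; [contradiction |].
  destruct Hin as [-> | Hin]; [rewrite Hf | rewrite IHl]; auto; ring.
Qed.

Lemma listprod_ge0 l f : (forall p, In p l -> 0 <= f p) -> 0 <= listprod l f.
Proof.
  induction l; intros H; simpl; [lra |].
  apply Rmult_le_pos; [| apply IHl; intros]; apply H; simpl; auto.
Qed.

Lemma listprod_le l f g : (forall p, In p l -> 0 <= f p <= g p) -> listprod l f <= listprod l g.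
Proof.
  induction l; intros H; simpl; [lra |].
  assert (0 <= listprod l f) by (apply listprod_ge0; intros; apply H; simpl; auto).
  pose proof (IHl ltac:(intros; apply H; simpl; auto)). pose proof (H a ltac:(simpl; auto)).
  apply Rmult_le_compat; lra.
Qed.

Lemma listprod_abs l f : Rabs (listprod l f) = listprod l (fun p => Rabs (f p)).
Proof. induction l; simpl; [apply Rabs_R1 | rewrite Rabs_mult, IHl; auto]. Qed.

Lemma listprod_pow l f k : listprod l (fun p => f p ^ k) = listprod l f ^ k.
Proof. induction l; simpl; [rewrite pow1 | rewrite IHl, Rpow_mult_distr]; auto. Qed.

Lemma INR_listprodn l : INR (listprodn l) = listprod l INR.
Proof. induction l; simpl; auto. rewrite mult_INR, IHl; auto. Qed.

Lemma listprodn_ge1 l : (forall p, In p l -> 1 <= p)%nat -> (1 <= listprodn l)%nat.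
Proof.
  induction l; intros H; simpl; auto.
  assert (1 <= a)%nat by (apply H; simpl; auto).
  assert (1 <= listprodn l)%nat by (apply IHl; intros; apply H; simpl; auto). nia.
Qed.

Lemma listprod_Rpower l s : (forall p, In p l -> 1 <= p)%nat ->
  listprod l (fun p => Rpower (INR p) s) = Rpower (INR (listprodn l)) s.
Proof.
  induction l; intros H; simpl.
  - unfold Rpower; rewrite ln_1, Rmult_0_r, exp_0; auto.
  - rewrite IHl by (intros; apply H; simpl; auto). rewrite mult_INR, Rpower_mult_distr; auto.
    + assert (1 <= a)%nat by (apply H; simpl; auto). apply lt_0_INR; lia.
    + pose proof (listprodn_ge1 l ltac:(intros; apply H; simpl; auto)). apply lt_0_INR; lia.
Qed.

Definition primes_upto (N : nat) : list nat := filter primeb (seq 1 N).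

Lemma prod1_primes N u :
  prod1 N (fun p => if primeb p then u p else 1) = listprod (primes_upto N) u.
Proof.
  unfold primes_upto. induction N; [reflexivity |].
  rewrite seq_S, filter_app. simpl prod1. rewrite IHN. unfold listprod. rewrite fold_right_app.
  simpl. destruct (primeb (S N)); simpl.
  - generalize (filter primeb (seq 1 N)). intros l.
    induction l; simpl; [ring | rewrite <- IHl; ring].
  - ring.
Qed.

Definition all_prime (l : list nat) : Prop := forall p, In p l -> primeb p = true.

Lemma primeb_spec p : primeb p = true <-> prime (Z.of_nat p).
Proof. unfold primeb. destruct (prime_dec (Z.of_nat p)); split; auto; discriminate. Qed.

Lemma primeb_ge2 p : primeb p = true -> (2 <= p)%nat.
Proof. intros H%primeb_spec. apply prime_ge_2 in H. lia. Qed.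

Lemma all_prime_ge1 S : all_prime S -> forall p, In p S -> (1 <= p)%nat.
Proof. intros H p Hp. pose proof (primeb_ge2 _ (H p Hp)). lia. Qed.

Lemma mod0_divide a b : (1 <= b)%nat -> (a mod b = 0)%nat <-> (Z.of_nat b | Z.of_nat a)%Z.
Proof. intros Hb. rewrite <- Z.mod_divide, <- Nat2Z.inj_mod by lia. lia. Qed.

Lemma mod0_trans a b c : (1 <= a)%nat -> (1 <= b)%nat ->
  (b mod a = 0)%nat -> (c mod b = 0)%nat -> (c mod a = 0)%nat.
Proof.
  intros Ha Hb H1 H2. apply mod0_divide in H1, H2; auto.
  apply mod0_divide; auto. eapply Z.divide_trans; eauto.
Qed.

Lemma prime_mod0_eq p q : primeb p = true -> primeb q = true -> (q mod p = 0)%nat -> p = q.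
Proof.
  intros Hp Hq Hd. pose proof (primeb_ge2 _ Hp). apply mod0_divide in Hd; [| lia].
  apply primeb_spec in Hp, Hq. pose proof (prime_div_prime _ _ Hp Hq Hd). lia.
Qed.

Lemma prime_mod0_mul p a b : primeb p = true ->
  ((a * b) mod p = 0)%nat -> (a mod p = 0 \/ b mod p = 0)%nat.
Proof.
  intros Hp Hd. pose proof (primeb_ge2 _ Hp). apply mod0_divide in Hd; [| lia].
  rewrite Nat2Z.inj_mul in Hd. apply primeb_spec in Hp.
  destruct (prime_mult _ Hp _ _ Hd); [left | right]; apply mod0_divide; auto; lia.
Qed.

Lemma prime_mod0_mulr p q m : primeb p = true -> primeb q = true -> p <> q ->
  ((q * m) mod p =? 0)%nat = (m mod p =? 0)%nat.
Proof.
  intros Hp Hq Hne. pose proof (primeb_ge2 _ Hp).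
  destruct (Nat.eqb_spec ((q * m) mod p) 0) as [H1 | H1];
    destruct (Nat.eqb_spec (m mod p) 0) as [H2 | H2]; auto.
  - destruct (prime_mod0_mul _ _ _ Hp H1) as [H3 | H3]; [| contradiction].
    apply prime_mod0_eq in H3; auto. contradiction.
  - exfalso. apply H1. apply mod0_divide in H2; [| lia]. apply mod0_divide; [lia |].
    rewrite Nat2Z.inj_mul. apply Z.divide_mul_r; auto.
Qed.

Lemma mod0_mul_prime p m n : primeb p = true -> (1 <= m)%nat ->
  (n mod p = 0)%nat -> (n mod m = 0)%nat -> (m mod p <> 0)%nat -> (n mod (p * m) = 0)%nat.
Proof.
  intros Hp Hm Hpn Hmn Hpm. pose proof (primeb_ge2 _ Hp).
  apply mod0_divide in Hpn, Hmn; try lia. apply mod0_divide; [nia |].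
  assert (Hndiv : ~ (Z.of_nat p | Z.of_nat m)%Z)
    by (intro Hc; apply Hpm; apply mod0_divide; auto; lia).
  apply primeb_spec in Hp. pose proof (prime_rel_prime _ Hp _ Hndiv) as Hrel.
  destruct Hmn as [k Hk]. rewrite Hk, Z.mul_comm in Hpn.
  destruct (Gauss _ _ _ Hpn Hrel) as [j Hj]. exists j. rewrite Nat2Z.inj_mul, Hk, Hj. ring.
Qed.

Lemma listprodn_mod_prime p S : primeb p = true -> all_prime S -> ~ In p S ->
  (listprodn S mod p <> 0)%nat.
Proof.
  intros Hp. induction S as [| q S IH]; intros HS Hin; simpl.
  - pose proof (primeb_ge2 _ Hp). rewrite Nat.mod_small; lia.
  - intros Hd. destruct (prime_mod0_mul _ _ _ Hp Hd) as [Hd' | Hd'].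
    + apply prime_mod0_eq in Hd'; auto; [apply Hin; simpl; auto | apply HS; simpl; auto].
    + apply IH; auto; [intros r Hr; apply HS | intro; apply Hin]; simpl; auto.
Qed.

Lemma mod0_listprodn S n : NoDup S -> all_prime S ->
  (forall p, In p S -> (n mod p = 0)%nat) -> (n mod listprodn S = 0)%nat.
Proof.
  induction S as [| q S IH]; intros Hnd HS Hd; [apply Nat.mod_1_r |].
  inversion Hnd; subst. assert (HS' : all_prime S) by (intros r Hr; apply HS; simpl; auto).
  apply mod0_mul_prime.
  - apply HS; simpl; auto.
  - apply listprodn_ge1, all_prime_ge1; auto.
  - apply Hd; simpl; auto.
  - apply IH; auto. intros; apply Hd; simpl; auto.
  - apply listprodn_mod_prime; auto. apply HS; simpl; auto.
Qed.

Lemma listprodn_mod0 S n p : all_prime S -> In p S ->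
  (n mod listprodn S = 0)%nat -> (n mod p = 0)%nat.
Proof.
  intros HS Hin Hd. pose proof (all_prime_ge1 S HS) as Hge1.
  apply (mod0_trans _ (listprodn S)); auto; [apply listprodn_ge1; auto |]. clear Hd.
  induction S as [| q S IH]; simpl in *; [contradiction |].
  destruct Hin as [-> | Hin].
  - rewrite Nat.mul_comm, Nat.Div0.mod_mul; auto.
  - assert (HS' : all_prime S) by (intros r Hr; apply HS; simpl; auto).
    apply (mod0_trans _ (listprodn S)); auto.
    + apply listprodn_ge1; auto.
    + rewrite Nat.Div0.mod_mul; auto.
Qed.

Lemma primes_upto_NoDup N : NoDup (primes_upto N).
Proof. apply NoDup_filter, seq_NoDup. Qed.

Lemma primes_upto_prime N : all_prime (primes_upto N).
Proof. intros p Hp. apply filter_In in Hp. tauto. Qed.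

Lemma sublist_primes_prime N S : sublist S (primes_upto N) -> all_prime S.
Proof. intros H p Hp. apply (primes_upto_prime N). eapply sublist_In; eauto. Qed.

Lemma sublist_primes_listprodn_ge1 N S : sublist S (primes_upto N) -> (1 <= listprodn S)%nat.
Proof. intros H. apply listprodn_ge1, all_prime_ge1. eapply sublist_primes_prime; eauto. Qed.

(** * The multiplicative structure of [J_e(n) n^-w] *)

Definition indic (b : bool) : R := if b then 1 else 0.

Definition euler_factor (e : list Z) (p : nat) : R :=
  prod1 (length e) (fun i => powerRZ (1 - / INR p ^ i) (ecoef e i)).

Definition Jratio (e : list Z) (n : nat) : R := JordanQ e n * powerRZ (INR n) (- weight e).

Lemma weight_sum1 e : IZR (weight e) = sum1 (length e) (fun i => INR i * IZR (ecoef e i)).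
Proof.
  unfold weight. generalize (length e) as r. intros r.
  assert (Hfold : forall l z, fold_right Z.add z l = (z + fold_right Z.add 0 l)%Z)
    by (induction l; intros z; simpl; [lia | rewrite IHl; lia]).
  induction r; [reflexivity |].
  rewrite seq_S, map_app, fold_right_app. cbn [sum1]. rewrite <- IHr. cbn [map fold_right].
  rewrite Hfold, plus_IZR, Z.add_0_r, mult_IZR, <- INR_IZR_INZ.
  replace (1 + r)%nat with (S r) by lia. ring.
Qed.

Lemma prod1_Rpower_weight e x : 0 < x ->
  prod1 (length e) (fun i => powerRZ (x ^ i) (ecoef e i)) = Rpower x (IZR (weight e)).
Proof.
  intros Hx. rewrite weight_sum1.
  rewrite (prod1_ext _ _ (fun i => Rpower x (INR i * IZR (ecoef e i)))).
  2:{ intros i _. rewrite powerRZ_Rpower by (apply pow_lt; auto).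
      rewrite <- Rpower_pow, Rpower_mult by auto. reflexivity. }
  generalize (length e) as r. induction r; simpl; [rewrite Rpower_O; auto |].
  rewrite IHr, Rpower_plus; auto.
Qed.

Lemma Jratio_prod1 e n : (1 <= n)%nat ->
  Jratio e n = prod1 n (fun p => if primeb p && (n mod p =? 0)%nat then euler_factor e p else 1).
Proof.
  intros Hn. assert (Hx : 0 < INR n) by (apply lt_0_INR; lia).
  set (local := fun p => if primeb p && (n mod p =? 0)%nat then euler_factor e p else 1).
  assert (HJ : JordanQ e n = Rpower (INR n) (IZR (weight e)) * prod1 n local).
  { unfold JordanQ, Jordan.
    rewrite (prod1_ext _ _ (fun i => powerRZ (INR n ^ i) (ecoef e i) * prod1 n (fun p =>
        powerRZ (if primeb p && (n mod p =? 0)%nat then 1 - / INR p ^ i else 1) (ecoef e i))))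
      by (intros; rewrite powerRZ_mult, powerRZ_prod1; reflexivity).
    rewrite prod1_mul, prod1_prod1_swap, prod1_Rpower_weight by auto. f_equal.
    apply prod1_ext. intros p _. unfold local.
    destruct (primeb p && (n mod p =? 0)%nat); [reflexivity |].
    rewrite (prod1_ext _ _ (fun _ => 1)) by (intros; apply powerRZ_R1). apply prod1_1. }
  unfold Jratio. rewrite HJ, powerRZ_Rpower, opp_IZR, Rpower_Ropp by auto.
  field. apply Rgt_not_eq, exp_pos.
Qed.

Lemma Jratio_prime e p : primeb p = true -> Jratio e p = euler_factor e p.
Proof.
  intros Hp. pose proof (primeb_ge2 _ Hp). rewrite Jratio_prod1 by lia.
  destruct p as [| p]; [lia |]. cbn [prod1]. rewrite Hp, Nat.Div0.mod_same. cbn [andb Nat.eqb].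
  rewrite (prod1_ext _ _ (fun _ => 1)), prod1_1; [ring |].
  intros q Hq. destruct (primeb q) eqn:Eq; simpl; auto.
  destruct (S p mod q =? 0)%nat eqn:E; auto.
  apply Nat.eqb_eq, prime_mod0_eq in E; auto. lia.
Qed.

Lemma Jratio_primes_upto e n N : (1 <= n <= N)%nat ->
  Jratio e n = listprod (primes_upto N) (fun p => if (n mod p =? 0)%nat then Jratio e p else 1).
Proof.
  intros Hn. rewrite Jratio_prod1, <- prod1_primes by lia.
  rewrite (prod1_widen n N) by (lia || (intros k Hk; destruct (primeb k); simpl; auto;
     rewrite Nat.mod_small by lia; destruct n; [lia | reflexivity])).
  apply prod1_ext. intros p _. destruct (primeb p) eqn:E; simpl; auto.
  destruct (n mod p =? 0)%nat; auto. symmetry; apply Jratio_prime; auto.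
Qed.

Lemma listprod_indic_mod0 S n : NoDup S -> all_prime S ->
  listprod S (fun p => indic (n mod p =? 0)%nat) = indic (n mod listprodn S =? 0)%nat.
Proof.
  intros Hnd Hpr. destruct (n mod listprodn S =? 0)%nat eqn:E; simpl.
  - apply Nat.eqb_eq in E. rewrite <- (listprod_1 S). apply listprod_ext. intros p Hp.
    unfold indic. rewrite (proj2 (Nat.eqb_eq _ _) (listprodn_mod0 S n p Hpr Hp E)). auto.
  - destruct (classic (exists p, In p S /\ (n mod p <> 0)%nat)) as [[p [Hp Hd]] | Hno].
    + apply (listprod_eq0 _ _ p Hp). unfold indic. apply Nat.eqb_neq in Hd. rewrite Hd. auto.
    + exfalso. apply Nat.eqb_neq in E. apply E, mod0_listprodn; auto. intros p Hp.
      destruct (Nat.eq_dec (n mod p) 0); auto. exfalso; eauto.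
Qed.

(* The Dirichlet coefficient [h(d)] of [G = 1 * h], at the squarefree [d = listprodn S]. *)
Definition hcoef (e : list Z) (S : list nat) : R := listprod S (fun p => Jratio e p - 1).

Lemma Jratio_sum_divisors e n N : (1 <= n <= N)%nat ->
  Jratio e n = sum_sublists (primes_upto N)
                 (fun S => indic (n mod listprodn S =? 0)%nat * hcoef e S).
Proof.
  intros Hn. rewrite (Jratio_primes_upto e n N Hn).
  rewrite (listprod_ext _ _ (fun p => 1 + indic (n mod p =? 0)%nat * (Jratio e p - 1)))
    by (intros p _; unfold indic; destruct (n mod p =? 0)%nat; ring).
  rewrite <- sum_sublists_listprod. apply sum_sublists_ext. intros S HS.
  rewrite listprod_mul. f_equal. apply listprod_indic_mod0.
  - eapply sublist_NoDup; eauto. apply primes_upto_NoDup.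
  - eapply sublist_primes_prime; eauto.
Qed.

Lemma sum1_multiples N d f : (1 <= d)%nat ->
  sum1 N (fun n => indic (n mod d =? 0)%nat * f n) = sum1 (N / d) (fun m => f (d * m)%nat).
Proof.
  intros Hd. induction N; [rewrite Nat.Div0.div_0_l; reflexivity |].
  pose proof (Nat.div_mod_eq N d) as Hdm. pose proof (Nat.mod_upper_bound N d ltac:(lia)) as Hb.
  set (q := (N / d)%nat) in *. set (r := (N mod d)%nat) in *.
  cbn [sum1]. rewrite IHN.
  destruct (Nat.eq_dec (S r) d) as [Heq | Hne].
  - assert (E1 : (S N / d = S q)%nat) by (symmetry; apply (Nat.div_unique _ _ _ 0); lia).
    assert (E2 : (S N mod d = 0)%nat) by (rewrite Nat.Div0.mod_eq, E1; nia).
    rewrite E1, E2. cbn [sum1 indic Nat.eqb]. rewrite Rmult_1_l. do 2 f_equal. nia.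
  - assert (E1 : (S N / d = q)%nat) by (symmetry; apply (Nat.div_unique _ _ _ (S r)); lia).
    assert (E2 : (S N mod d = S r)%nat) by (rewrite Nat.Div0.mod_eq, E1; nia).
    rewrite E1, E2. simpl. ring.
Qed.

Lemma sum1_Jratio_mul_expand e N0 N g : (N0 <= N)%nat ->
  (forall a b, (1 <= a)%nat -> (1 <= b)%nat -> g (a * b)%nat = g a * g b) ->
  sum1 N0 (fun n => Jratio e n * g n) =
  sum_sublists (primes_upto N)
    (fun S => hcoef e S * g (listprodn S) * sum1 (N0 / listprodn S) g).
Proof.
  intros HN Hg.
  rewrite (sum1_ext _ _ (fun n => sum_sublists (primes_upto N)
              (fun S => indic (n mod listprodn S =? 0)%nat * g n * hcoef e S))).
  2:{ intros n Hn. rewrite (Jratio_sum_divisors e n N), Rmult_comm, <- sum_sublists_scal by lia.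
      apply sum_sublists_ext; intros; ring. }
  rewrite <- sum_sublists_sum1. apply sum_sublists_ext. intros S HS.
  pose proof (sublist_primes_listprodn_ge1 _ _ HS) as Hd.
  rewrite (sum1_ext _ _ (fun n => hcoef e S * (indic (n mod listprodn S =? 0)%nat * g n)))
    by (intros; ring).
  rewrite sum1_scal, sum1_multiples, Rmult_assoc by auto. f_equal.
  rewrite <- sum1_scal. apply sum1_ext. intros m Hm. apply Hg; auto; lia.
Qed.

Lemma SingPartial_sum_sublists e N :
  SingPartial e N = sum_sublists (primes_upto N) (fun S => hcoef e S / INR (listprodn S)).
Proof.
  unfold SingPartial.
  rewrite (prod1_ext N _ (fun p => if primeb p then 1 + (Jratio e p - 1) / INR p else 1))
    by reflexivity.
  rewrite prod1_primes.
  rewrite <- sum_sublists_listprod. apply sum_sublists_ext. intros S _.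
  unfold Rdiv, hcoef. rewrite listprod_mul, INR_listprodn. f_equal.
  clear. induction S; simpl; [lra | rewrite IHS, Rinv_mult; auto].
Qed.

Lemma listprod_1add_sum_sublists e N eps :
  listprod (primes_upto N) (fun p => 1 + Rabs (Jratio e p - 1) * Rpower (INR p) (- eps)) =
  sum_sublists (primes_upto N)
    (fun S => Rabs (hcoef e S) * Rpower (INR (listprodn S)) (- eps)).
Proof.
  rewrite <- sum_sublists_listprod. apply sum_sublists_ext. intros S HS.
  rewrite listprod_mul. unfold hcoef. rewrite listprod_abs, listprod_Rpower; auto.
  apply all_prime_ge1. eapply sublist_primes_prime; eauto.
Qed.

Lemma exp_le x y : x <= y -> exp x <= exp y.
Proof. intros [H | ->]; [apply Rlt_le, exp_increasing; auto | lra]. Qed.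

Lemma ln_le x y : 0 < x -> x <= y -> ln x <= ln y.
Proof. intros Hx [H | ->]; [apply Rlt_le, ln_increasing; auto | lra]. Qed.

Lemma ln_ge0 x : 1 <= x -> 0 <= ln x.
Proof. intros H. rewrite <- ln_1. apply ln_le; lra. Qed.

Lemma ln_le_sub1 y : 0 < y -> ln y <= y - 1.
Proof. intros H. pose proof (exp_ineq1_le (ln y)). rewrite exp_ln in *; auto. lra. Qed.

Lemma Rpower_pos x a : 0 < Rpower x a.
Proof. apply exp_pos. Qed.

Lemma Rpower_1_base a : Rpower 1 a = 1.
Proof. unfold Rpower. rewrite ln_1, Rmult_0_r, exp_0. auto. Qed.

Lemma Rpower_inv_base x a : 0 < x -> Rpower (/ x) a = / Rpower x a.
Proof. intros H. unfold Rpower. rewrite ln_Rinv, <- exp_Ropp by auto. f_equal; ring. Qed.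

Lemma Rpower_div_base x y a : 0 < x -> 0 < y -> Rpower (x / y) a = Rpower x a / Rpower y a.
Proof.
  intros. unfold Rdiv. rewrite <- Rpower_inv_base, Rpower_mult_distr; auto.
  apply Rinv_0_lt_compat; auto.
Qed.

Lemma ln_Rpower x a : ln (Rpower x a) = a * ln x.
Proof. unfold Rpower. rewrite ln_exp; auto. Qed.

Lemma Rpower_anti_exp x a b : 0 < x <= 1 -> a <= b -> Rpower x b <= Rpower x a.
Proof.
  intros Hx Hab. unfold Rpower. apply exp_le.
  assert (ln x <= 0) by (rewrite <- ln_1; apply ln_le; lra). nra.
Qed.

Lemma Rpower_anti_base x y a : a <= 0 -> 0 < x <= y -> Rpower y a <= Rpower x a.
Proof.
  intros Ha Hxy. unfold Rpower. apply exp_le.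
  pose proof (ln_le x y ltac:(lra) ltac:(lra)). nra.
Qed.

Lemma Rpower_ge1 x a : 1 <= x -> 0 <= a -> 1 <= Rpower x a.
Proof. intros. rewrite <- (Rpower_1_base a). apply Rle_Rpower_l; lra. Qed.

Lemma Rpower_le1 x a : 1 <= x -> a <= 0 -> Rpower x a <= 1.
Proof. intros. rewrite <- (Rpower_1_base a). apply Rpower_anti_base; lra. Qed.

Lemma Rpower_le_2_Rabs r a : 1 <= r <= 2 -> Rpower r a <= Rpower 2 (Rabs a).
Proof.
  intros Hr. unfold Rpower. apply exp_le.
  pose proof (ln_ge0 r ltac:(lra)). pose proof (ln_le r 2 ltac:(lra) ltac:(lra)).
  pose proof (Rle_abs a). pose proof (Rabs_pos a). nra.
Qed.

Lemma Rpower_ratio_le u v a : 0 < u <= v -> v <= 2 * u ->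
  Rpower v a <= Rpower 2 (Rabs a) * Rpower u a /\ Rpower u a <= Rpower 2 (Rabs a) * Rpower v a.
Proof.
  intros Hu Hv. set (r := v / u).
  assert (Hr : 1 <= r <= 2).
  { unfold r; split; apply Rmult_le_reg_r with u; try lra;
      unfold Rdiv; rewrite Rmult_assoc, Rinv_l; lra. }
  assert (Hvu : v = u * r) by (unfold r; field; lra).
  pose proof (Rpower_pos u a). pose proof (Rpower_pos r a).
  rewrite Hvu, <- Rpower_mult_distr by lra. split.
  - rewrite Rmult_comm. apply Rmult_le_compat_r; [lra | apply Rpower_le_2_Rabs; auto].
  - pose proof (Rpower_le_2_Rabs r (- a) Hr) as Hinv. rewrite Rabs_Ropp, Rpower_Ropp in Hinv.
    apply Rle_trans with (/ Rpower r a * (Rpower u a * Rpower r a)); [right; field; lra |].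
    apply Rmult_le_compat_r; nra.
Qed.

Lemma MVT_Rpower u v a : 0 < u < v -> exists xi, u < xi < v /\
  Rpower v a - Rpower u a = a * Rpower xi (a - 1) * (v - u).
Proof.
  intros Huv.
  destruct (MVT_cor2 (fun x => Rpower x a) (fun x => a * Rpower x (a - 1)) u v)
    as [c [Hc1 Hc2]]; [lra | intros c Hc; apply derivable_pt_lim_power; lra |].
  exists c; auto.
Qed.

Lemma MVT_ln u v : 0 < u < v -> exists xi, u < xi < v /\ ln v - ln u = / xi * (v - u).
Proof.
  intros Huv. destruct (MVT_cor2 ln (fun x => / x) u v) as [c [Hc1 Hc2]];
    [lra | intros c Hc; apply derivable_pt_lim_ln; lra |].
  exists c; auto.
Qed.

Lemma ln_le_Rpower_div x d : 1 <= x -> 0 < d -> ln x <= Rpower x d / d.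
Proof.
  intros Hx Hd. apply Rmult_le_reg_l with d; auto. unfold Rdiv.
  rewrite (Rmult_comm (Rpower x d)), <- Rmult_assoc, Rinv_r, Rmult_1_l by lra.
  rewrite <- ln_Rpower. pose proof (ln_le_sub1 (Rpower x d) (Rpower_pos _ _)). lra.
Qed.

(** * The local factors: [|J_e(p) p^-w - 1| <= |e_1| / p + O(1 / p^2)] *)

Definition approx1 (t X al c : R) : Prop := Rabs (X - 1 - al * t) <= c * t ^ 2.

Lemma approx1_1 t : approx1 t 1 0 0.
Proof. unfold approx1. replace (1 - 1 - 0 * t) with 0 by ring. rewrite Rabs_R0. lra. Qed.

Lemma Rabs_1_add_mul_le al t : 0 <= t <= 1 -> Rabs (1 + al * t) <= 1 + Rabs al.
Proof.
  intros Ht. eapply Rle_trans; [apply Rabs_triang |].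
  rewrite Rabs_R1, Rabs_mult, (Rabs_right t) by lra.
  pose proof (Rabs_pos al). assert (Rabs al * t <= Rabs al * 1) by (apply Rmult_le_compat_l; lra).
  lra.
Qed.

Lemma approx1_Rabs_le t X al c : 0 <= t <= 1 -> 0 <= c -> approx1 t X al c ->
  Rabs X <= 1 + Rabs al + c.
Proof.
  unfold approx1. intros Ht Hc HX.
  replace X with ((1 + al * t) + (X - 1 - al * t)) by ring.
  eapply Rle_trans; [apply Rabs_triang |]. pose proof (Rabs_1_add_mul_le al t Ht).
  assert (c * t ^ 2 <= c * 1) by (apply Rmult_le_compat_l; simpl; nra). lra.
Qed.

Lemma approx1_mul t X Y al be c d : 0 <= t <= 1 -> 0 <= c -> 0 <= d ->
  approx1 t X al c -> approx1 t Y be d ->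
  approx1 t (X * Y) (al + be) (Rabs al * Rabs be + c * (1 + Rabs be + d) + d * (1 + Rabs al)).
Proof.
  intros Ht Hc Hd HX HY. pose proof (approx1_Rabs_le _ _ _ _ Ht Hd HY) as HYb.
  pose proof (Rabs_1_add_mul_le al t Ht) as Hal. unfold approx1 in *.
  set (r := X - 1 - al * t) in *. set (s := Y - 1 - be * t) in *.
  replace (X * Y - 1 - (al + be) * t) with (al * be * t ^ 2 + r * Y + s * (1 + al * t))
    by (unfold r, s; ring).
  eapply Rle_trans; [apply Rabs_triang |].
  eapply Rle_trans; [apply Rplus_le_compat_r, Rabs_triang |].
  rewrite !Rabs_mult, (Rabs_right (t ^ 2)) by (apply Rle_ge, pow2_ge_0).
  pose proof (Rabs_pos r). pose proof (Rabs_pos s). pose proof (Rabs_pos Y).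
  pose proof (pow2_ge_0 t).
  assert (Rabs r * Rabs Y <= c * t ^ 2 * (1 + Rabs be + d)) by (apply Rmult_le_compat; auto).
  assert (Rabs s * Rabs (1 + al * t) <= d * t ^ 2 * (1 + Rabs al))
    by (apply Rmult_le_compat; auto; apply Rabs_pos).
  lra.
Qed.

Definition approx1_on (F : R -> R) (al c : R) : Prop :=
  forall t, 0 <= t <= 1/2 -> approx1 t (F t) al c.

Lemma approx1_on_mul F G al be c d : 0 <= c -> 0 <= d ->
  approx1_on F al c -> approx1_on G be d ->
  exists c', 0 <= c' /\ approx1_on (fun t => F t * G t) (al + be) c'.
Proof.
  intros Hc Hd HF HG.
  exists (Rabs al * Rabs be + c * (1 + Rabs be + d) + d * (1 + Rabs al)). split.
  - pose proof (Rabs_pos al); pose proof (Rabs_pos be). nra.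
  - intros t Ht. apply approx1_mul; auto; lra.
Qed.

Lemma approx1_on_pow F al c : 0 <= c -> approx1_on F al c ->
  forall k, exists c', 0 <= c' /\ approx1_on (fun t => F t ^ k) (INR k * al) c'.
Proof.
  intros Hc HF k. induction k as [| k [c' [Hc' IH]]].
  - exists 0. split; [lra |]. intros t Ht. simpl. rewrite Rmult_0_l. apply approx1_1.
  - destruct (approx1_on_mul _ _ _ _ _ _ Hc' Hc IH HF) as [c'' [H1 H2]].
    exists c''. split; auto. intros t Ht. rewrite S_INR, Rmult_plus_distr_r, Rmult_1_l.
    simpl. rewrite Rmult_comm. apply (H2 t Ht).
Qed.

Lemma approx1_on_1_sub : approx1_on (fun u => 1 - u) (-1) 0.
Proof.
  intros t Ht. unfold approx1. replace (1 - t - 1 - -1 * t) with 0 by ring.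
  rewrite Rabs_R0. simpl; nra.
Qed.

Lemma approx1_on_inv_1_sub : approx1_on (fun u => / (1 - u)) 1 2.
Proof.
  intros t Ht. unfold approx1.
  replace (/ (1 - t) - 1 - 1 * t) with (t ^ 2 / (1 - t)) by (field; lra).
  assert (0 <= t ^ 2) by apply pow2_ge_0.
  rewrite Rabs_right by (apply Rle_ge, Rmult_le_pos; [| apply Rlt_le, Rinv_0_lt_compat]; lra).
  apply Rmult_le_reg_r with (1 - t); [lra |].
  unfold Rdiv. rewrite Rmult_assoc, Rinv_l by lra. nra.
Qed.

Lemma approx1_on_powerRZ_1_sub z :
  exists c, 0 <= c /\ approx1_on (fun u => powerRZ (1 - u) z) (- IZR z) c.
Proof.
  destruct (Z_le_gt_dec 0 z) as [Hz | Hz].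
  - destruct (approx1_on_pow _ _ _ (Rle_refl 0) approx1_on_1_sub (Z.to_nat z)) as [c [Hc H]].
    exists c. split; auto. intros t Ht. specialize (H t Ht).
    rewrite <- (Z2Nat.id z) at 1 by lia. rewrite <- pow_powerRZ.
    rewrite INR_IZR_INZ, Z2Nat.id in H by lia.
    replace (- IZR z) with (IZR z * -1) by ring.
    auto.
  - destruct (approx1_on_pow _ 1 2 ltac:(lra) approx1_on_inv_1_sub (Z.to_nat (- z))) as [c [Hc H]].
    exists c. split; auto. intros t Ht. specialize (H t Ht).
    replace z with (- Z.of_nat (Z.to_nat (- z)))%Z at 1 by lia.
    rewrite INR_IZR_INZ, Z2Nat.id, Rmult_1_r, opp_IZR in H by lia.
    rewrite powerRZ_neg', <- pow_powerRZ, <- pow_inv. auto.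
Qed.

(* Only the factor [i = 1] contributes to first order, since [t ^ i = O(t ^ 2)] for [i >= 2]. *)
Lemma approx1_on_powerRZ_1_sub_pow z i : (1 <= i)%nat ->
  exists c, 0 <= c /\
    approx1_on (fun t => powerRZ (1 - t ^ i) z) (if (i =? 1)%nat then - IZR z else 0) c.
Proof.
  intros Hi. destruct (approx1_on_powerRZ_1_sub z) as [c [Hc H]].
  destruct (Nat.eqb_spec i 1) as [-> | Hne].
  - exists c; split; auto. intros t Ht. rewrite pow_1. apply H; auto.
  - exists (Rabs (IZR z) + c). split; [pose proof (Rabs_pos (IZR z)); lra |].
    intros t Ht. assert (Hu : 0 <= t ^ i <= t ^ 2).
    { split; [apply pow_le; lra |]. replace i with (2 + (i - 2))%nat by lia. rewrite pow_add.
      assert (0 <= t ^ (i - 2) <= 1)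
        by (split; [apply pow_le; lra | rewrite <- (pow1 (i - 2)); apply pow_incr; lra]).
      pose proof (pow2_ge_0 t). nra. }
    assert (Hu2 : t ^ i <= 1/2) by (simpl in Hu; nra).
    specialize (H (t ^ i) ltac:(lra)). unfold approx1 in *.
    replace (powerRZ (1 - t ^ i) z - 1 - 0 * t)
      with ((powerRZ (1 - t ^ i) z - 1 - - IZR z * t ^ i) - IZR z * t ^ i) by ring.
    eapply Rle_trans; [apply Rabs_triang |].
    rewrite Rabs_Ropp, Rabs_mult, (Rabs_right (t ^ i)) by lra.
    assert ((t ^ i) ^ 2 <= t ^ 2) by (simpl; simpl in Hu; nra).
    pose proof (Rabs_pos (IZR z)). nra.
Qed.

Lemma approx1_on_euler_factor e :
  exists c, 0 <= c /\
    approx1_on (fun t => prod1 (length e) (fun i => powerRZ (1 - t ^ i) (ecoef e i)))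
      (- IZR (ecoef e 1)) c.
Proof.
  assert (Hr : forall r, exists c, 0 <= c /\
      approx1_on (fun t => prod1 r (fun i => powerRZ (1 - t ^ i) (ecoef e i)))
        (if (r =? 0)%nat then 0 else - IZR (ecoef e 1)) c).
  { induction r as [| r [c [Hc IH]]].
    - exists 0. split; [lra |]. intros t Ht. apply approx1_1.
    - destruct (approx1_on_powerRZ_1_sub_pow (ecoef e (S r)) (S r) ltac:(lia)) as [d [Hd HF]].
      destruct (approx1_on_mul _ _ _ _ _ _ Hc Hd IH HF) as [c' [Hc' H']].
      exists c'. split; auto. intros t Ht. specialize (H' t Ht).
      destruct r; simpl in *; [rewrite Rplus_0_l in H' | rewrite Rplus_0_r in H']; auto. }
  destruct (Hr (length e)) as [c [Hc H]]. exists c. split; auto.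
  destruct (length e) eqn:E; auto. destruct e; [| discriminate].
  unfold ecoef; simpl. rewrite Ropp_0. auto.
Qed.

Lemma Jratio_prime_sub1_le e : exists B, 0 <= B /\ forall p, primeb p = true ->
  Rabs (Jratio e p - 1) <= INR (Z.abs_nat (ecoef e 1)) / INR p + B / INR p ^ 2.
Proof.
  destruct (approx1_on_euler_factor e) as [c [Hc H]]. exists c. split; auto. intros p Hp.
  rewrite Jratio_prime by auto. pose proof (primeb_ge2 _ Hp) as Hp2. apply le_INR in Hp2.
  simpl in Hp2. set (t := / INR p).
  assert (Ht : 0 <= t <= 1/2).
  { unfold t. split; [apply Rlt_le, Rinv_0_lt_compat; lra |].
    apply Rmult_le_reg_r with (INR p); [lra |]. rewrite Rinv_l; lra. }
  specialize (H t Ht). unfold approx1 in H. unfold euler_factor.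
  rewrite (prod1_ext _ _ (fun i => powerRZ (1 - t ^ i) (ecoef e i)))
    by (intros; unfold t; rewrite pow_inv; auto).
  set (X := prod1 (length e) (fun i => powerRZ (1 - t ^ i) (ecoef e i))) in *.
  replace (X - 1) with ((X - 1 - - IZR (ecoef e 1) * t) - IZR (ecoef e 1) * t) by ring.
  eapply Rle_trans; [apply Rabs_triang |].
  rewrite Rabs_Ropp, Rabs_mult, (Rabs_right t), INR_IZR_INZ, Zabs2Nat.id_abs, abs_IZR by lra.
  replace (Rabs (IZR (ecoef e 1)) / INR p) with (Rabs (IZR (ecoef e 1)) * t) by reflexivity.
  replace (c / INR p ^ 2) with (c * t ^ 2) by (unfold t, Rdiv; rewrite pow_inv; ring). lra.
Qed.

(** * Euler products: a Rankin-type bound *)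

Definition coprime_to (Q : list nat) (n : nat) : bool :=
  forallb (fun p => negb (n mod p =? 0)%nat) Q.

Definition zeta_coprime (s : R) (Q : list nat) (L : nat) : R :=
  sum1 L (fun n => indic (coprime_to Q n) * Rpower (INR n) (- s)).

Lemma indic_ge0 b : 0 <= indic b.
Proof. destruct b; simpl; lra. Qed.

Lemma zeta_coprime_le_mono s Q L L' : (L <= L')%nat -> zeta_coprime s Q L <= zeta_coprime s Q L'.
Proof.
  intros H. apply sum1_le_mono; auto. intros n.
  apply Rmult_le_pos; [apply indic_ge0 | apply Rlt_le, Rpower_pos].
Qed.

Lemma zeta_coprime_cons_le s q Q L : zeta_coprime s (q :: Q) L <= zeta_coprime s Q L.
Proof.
  apply sum1_le. intros n _. apply Rmult_le_compat_r; [apply Rlt_le, Rpower_pos |].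
  unfold coprime_to; simpl. destruct (negb _), (forallb _ _); simpl; lra.
Qed.

Lemma coprime_to_mul_prime q Q m : primeb q = true -> all_prime Q -> ~ In q Q ->
  coprime_to Q (q * m) = coprime_to Q m.
Proof.
  intros Hq. induction Q as [| p Q IH]; intros HQ Hin; simpl; auto.
  rewrite prime_mod0_mulr, IH; auto.
  - intros r Hr; apply HQ; simpl; auto.
  - intro; apply Hin; simpl; auto.
  - apply HQ; simpl; auto.
  - intro; apply Hin; simpl; auto.
Qed.

(* Splitting off the multiples of [q]: the sieve identity behind the Euler product. *)
Lemma zeta_coprime_split s q Q M : primeb q = true -> all_prime Q -> ~ In q Q ->
  zeta_coprime s Q (q * M) =
  zeta_coprime s (q :: Q) (q * M) + Rpower (INR q) (- s) * zeta_coprime s Q M.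
Proof.
  intros Hq HQ Hin. pose proof (primeb_ge2 _ Hq). unfold zeta_coprime.
  rewrite (sum1_ext (q * M) _ (fun n => indic (coprime_to (q :: Q) n) * Rpower (INR n) (- s)
      + indic (n mod q =? 0)%nat * (indic (coprime_to Q n) * Rpower (INR n) (- s)))).
  2:{ intros n _. unfold coprime_to at 2; simpl. fold (coprime_to Q n).
      destruct (n mod q =? 0)%nat, (coprime_to Q n); simpl; ring. }
  rewrite sum1_add, sum1_multiples by lia. f_equal.
  replace (q * M / q)%nat with M by (rewrite Nat.mul_comm, Nat.div_mul; lia).
  rewrite <- sum1_scal. apply sum1_ext. intros m Hm.
  rewrite coprime_to_mul_prime, mult_INR, <- Rpower_mult_distr by (auto; apply lt_0_INR; lia).
  ring.
Qed.

Lemma zeta_coprime_step s q Q M : 0 < s -> primeb q = true -> all_prime Q -> ~ In q Q ->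
  (1 + Rpower (INR q) (- s)) * zeta_coprime s (q :: Q) M <= zeta_coprime s Q (q * M).
Proof.
  intros Hs Hq HQ Hin. pose proof (primeb_ge2 _ Hq). rewrite zeta_coprime_split by auto.
  assert (zeta_coprime s (q :: Q) M <= zeta_coprime s (q :: Q) (q * M))
    by (apply zeta_coprime_le_mono; nia).
  pose proof (zeta_coprime_cons_le s q Q M). pose proof (Rpower_pos (INR q) (- s)). nra.
Qed.

Lemma zeta_coprime_1 s Q : all_prime Q -> zeta_coprime s Q 1 = 1.
Proof.
  intros HQ. unfold zeta_coprime. simpl. replace (coprime_to Q 1) with true.
  - simpl. rewrite Rpower_1_base. ring.
  - symmetry. apply forallb_forall. intros p Hp.
    pose proof (primeb_ge2 _ (HQ p Hp)). rewrite Nat.mod_small by lia. reflexivity.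
Qed.

Lemma listprod_zeta_coprime_le s Q : 0 < s -> NoDup Q -> all_prime Q -> forall M,
  listprod Q (fun p => 1 + Rpower (INR p) (- s)) * zeta_coprime s Q M
  <= zeta_coprime s nil (M * listprodn Q).
Proof.
  intros Hs. induction Q as [| q Q IH]; intros Hnd HQ M.
  - simpl. rewrite Nat.mul_1_r. lra.
  - inversion Hnd; subst. assert (HQ' : all_prime Q) by (intros r Hr; apply HQ; simpl; auto).
    pose proof (zeta_coprime_step s q Q M Hs (HQ q (or_introl eq_refl)) HQ' H1).
    assert (0 <= listprod Q (fun p => 1 + Rpower (INR p) (- s)))
      by (apply listprod_ge0; intros; pose proof (Rpower_pos (INR p) (- s)); lra).
    specialize (IH H2 HQ' (q * M)%nat). simpl listprod. simpl listprodn.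
    replace (M * (q * listprodn Q))%nat with (q * M * listprodn Q)%nat by ring.
    eapply Rle_trans; [| apply IH].
    rewrite (Rmult_comm (1 + _)), Rmult_assoc. apply Rmult_le_compat_l; auto.
Qed.

Lemma Rpower_succ_le_diff s y : 1 < s -> 1 <= y ->
  Rpower (y + 1) (- s) <= (Rpower y (1 - s) - Rpower (y + 1) (1 - s)) / (s - 1).
Proof.
  intros Hs Hy. destruct (MVT_Rpower y (y + 1) (1 - s) ltac:(lra)) as [xi [Hxi Heq]].
  replace (1 - s - 1) with (- s) in Heq by ring. replace (y + 1 - y) with 1 in Heq by ring.
  assert (Rpower (y + 1) (- s) <= Rpower xi (- s)) by (apply Rpower_anti_base; lra).
  apply Rmult_le_reg_r with (s - 1); [lra |]. unfold Rdiv.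
  rewrite Rmult_assoc, Rinv_l, Rmult_1_r by lra. nra.
Qed.

Lemma zeta_partial_le s L : 1 < s -> zeta_coprime s nil L <= s / (s - 1).
Proof.
  intros Hs. unfold zeta_coprime. simpl.
  assert (Htele : forall L, (1 <= L)%nat ->
    sum1 L (fun n => 1 * Rpower (INR n) (- s)) <= 1 + (1 - Rpower (INR L) (1 - s)) / (s - 1)).
  { intros L0 HL. induction HL.
    - simpl. rewrite !Rpower_1_base. unfold Rdiv. lra.
    - cbn [sum1]. rewrite S_INR, Rmult_1_l.
      pose proof (Rpower_succ_le_diff s (INR m) Hs ltac:(apply (le_INR 1); auto)).
      apply Rle_trans with (1 + (1 - Rpower (INR m) (1 - s)) / (s - 1)
        + (Rpower (INR m) (1 - s) - Rpower (INR m + 1) (1 - s)) / (s - 1)); [lra |].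
      right. field. lra. }
  destruct L; [simpl; apply Rlt_le, Rdiv_lt_0_compat; lra |].
  eapply Rle_trans; [apply Htele; lia |]. pose proof (Rpower_pos (INR (S L)) (1 - s)).
  assert ((1 - Rpower (INR (S L)) (1 - s)) / (s - 1) <= 1 / (s - 1))
    by (unfold Rdiv; apply Rmult_le_compat_r; [apply Rlt_le, Rinv_0_lt_compat |]; lra).
  replace (s / (s - 1)) with (1 + 1 / (s - 1)) by (field; lra). lra.
Qed.

Lemma listprod_primes_1add_Rpower_le s N : 1 < s ->
  listprod (primes_upto N) (fun p => 1 + Rpower (INR p) (- s)) <= s / (s - 1).
Proof.
  intros Hs.
  pose proof (listprod_zeta_coprime_le s (primes_upto N) ltac:(lra)
                (primes_upto_NoDup N) (primes_upto_prime N) 1) as H.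
  rewrite zeta_coprime_1, Rmult_1_r in H by apply primes_upto_prime.
  eapply Rle_trans; [apply H | apply zeta_partial_le; auto].
Qed.

Lemma pow_1add_ge u k : 0 <= u -> 1 + INR k * u <= (1 + u) ^ k.
Proof.
  intros Hu. induction k; [simpl; lra |]. rewrite S_INR. simpl.
  assert (0 <= INR k * u) by (apply Rmult_le_pos; auto; apply pos_INR). nra.
Qed.

Lemma listprod_primes_1add_inv_sqr_le B N : 0 <= B ->
  listprod (primes_upto N) (fun p => 1 + B / INR p ^ 2) <= exp (2 * B).
Proof.
  intros HB. assert (Hnn : forall n, 0 <= B * / INR n ^ 2).
  { intros n. apply Rmult_le_pos; auto. destruct n; [simpl; rewrite Rmult_0_l, Rinv_0; lra |].
    apply Rlt_le, Rinv_0_lt_compat, pow_lt, lt_0_INR; lia. }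
  rewrite <- prod1_primes. eapply Rle_trans.
  - apply (prod1_le _ _ (fun n => 1 + B * / INR n ^ 2)). intros n _.
    specialize (Hnn n). destruct (primeb n); unfold Rdiv; lra.
  - eapply Rle_trans; [apply prod1_1add_le_exp; auto |]. apply exp_le.
    rewrite sum1_scal. pose proof (sum1_inv_sqr_le N). nra.
Qed.

Lemma local_factor_le e B eps p : 0 < eps <= 1 -> 0 <= B -> primeb p = true ->
  Rabs (Jratio e p - 1) <= INR (Z.abs_nat (ecoef e 1)) / INR p + B / INR p ^ 2 ->
  0 <= 1 + Rabs (Jratio e p - 1) * Rpower (INR p) (- eps)
    <= (1 + Rpower (INR p) (- (1 + eps))) ^ Z.abs_nat (ecoef e 1) * (1 + B / INR p ^ 2).
Proof.
  intros Heps HB Hpr Hbp. set (a := Z.abs_nat (ecoef e 1)) in *.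
  pose proof (primeb_ge2 _ Hpr) as Hp2. apply le_INR in Hp2. simpl in Hp2.
  set (u := Rpower (INR p) (- (1 + eps))).
  pose proof (Rpower_pos (INR p) (- eps)) as Hpe. pose proof (Rabs_pos (Jratio e p - 1)).
  split; [nra |].
  assert (Hpe1 : Rpower (INR p) (- eps) <= 1) by (apply Rpower_le1; lra).
  assert (Hu : u = / INR p * Rpower (INR p) (- eps))
    by (unfold u; rewrite Ropp_plus_distr, Rpower_plus, Rpower_Ropp, Rpower_1; lra).
  assert (Hup : 0 <= u) by apply Rlt_le, Rpower_pos.
  assert (HBp : 0 <= B / INR p ^ 2)
    by (apply Rmult_le_pos; auto; apply Rlt_le, Rinv_0_lt_compat, pow_lt; lra).
  apply Rle_trans with (1 + INR a * u + B / INR p ^ 2).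
  - apply Rle_trans with (1 + (INR a / INR p + B / INR p ^ 2) * Rpower (INR p) (- eps));
      [apply Rplus_le_compat_l, Rmult_le_compat_r; lra |].
    rewrite Hu. unfold Rdiv.
    assert (B * / INR p ^ 2 * Rpower (INR p) (- eps) <= B * / INR p ^ 2 * 1)
      by (apply Rmult_le_compat_l; auto). lra.
  - pose proof (pow_1add_ge u a Hup).
    assert (0 <= INR a * u) by (apply Rmult_le_pos; auto; apply pos_INR). nra.
Qed.

Lemma listprod_primes_local_factor_le e : exists K, 0 < K /\ forall eps N, 0 < eps <= 1 ->
  listprod (primes_upto N) (fun p => 1 + Rabs (Jratio e p - 1) * Rpower (INR p) (- eps))
  <= K / eps ^ Z.abs_nat (ecoef e 1).
Proof.
  destruct (Jratio_prime_sub1_le e) as [B [HB Hb]]. set (a := Z.abs_nat (ecoef e 1)) in *.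
  exists (2 ^ a * exp (2 * B)).
  split; [apply Rmult_lt_0_compat; [apply pow_lt; lra | apply exp_pos] |].
  intros eps N Heps. set (P := primes_upto N).
  eapply Rle_trans.
  { apply listprod_le. intros p Hp. pose proof (primes_upto_prime N p Hp) as Hpr.
    apply (local_factor_le e B eps p Heps HB Hpr (Hb p Hpr)). }
  rewrite listprod_mul, listprod_pow.
  assert (H1 : 0 <= listprod P (fun p => 1 + Rpower (INR p) (- (1 + eps))))
    by (apply listprod_ge0; intros; pose proof (Rpower_pos (INR p) (- (1 + eps))); lra).
  assert (H2 : listprod P (fun p => 1 + Rpower (INR p) (- (1 + eps))) <= 2 / eps).
  { eapply Rle_trans; [apply listprod_primes_1add_Rpower_le; lra |].
    replace (1 + eps - 1) with eps by ring.
    unfold Rdiv. apply Rmult_le_compat_r; [apply Rlt_le, Rinv_0_lt_compat |]; lra. }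
  pose proof (listprod_primes_1add_inv_sqr_le B N HB) as H3.
  assert (H4 : 0 <= listprod P (fun p => 1 + B / INR p ^ 2)).
  { apply listprod_ge0. intros p Hp. pose proof (primeb_ge2 _ (primes_upto_prime N p Hp)).
    assert (0 <= B / INR p ^ 2)
      by (apply Rmult_le_pos; auto; apply Rlt_le, Rinv_0_lt_compat, pow_lt, lt_0_INR; lia).
    lra. }
  assert (H5 : listprod P (fun p => 1 + Rpower (INR p) (- (1 + eps))) ^ a <= 2 ^ a / eps ^ a)
    by (unfold Rdiv; rewrite <- pow_inv, <- Rpow_mult_distr; apply pow_incr; lra).
  apply Rle_trans with (2 ^ a / eps ^ a * exp (2 * B)).
  - apply Rmult_le_compat; auto. apply pow_le; auto.
  - right. unfold Rdiv. ring.
Qed.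

Lemma nat_above X : exists N, X <= INR N.
Proof.
  destruct (archimed X) as [H1 H2]. exists (Z.to_nat (up X)).
  destruct (Z_le_gt_dec 0 (up X)).
  - rewrite INR_IZR_INZ, Z2Nat.id by auto. lra.
  - replace (Z.to_nat (up X)) with 0%nat by lia. simpl.
    assert (up X <= -1)%Z by lia. apply IZR_le in H. lra.
Qed.

Lemma cauchy_bound_limit (u b : nat -> R) n0 :
  (forall n m, (n0 <= n <= m)%nat -> Rabs (u m - u n) <= b n) ->
  (forall eta, 0 < eta -> exists N, forall n, (N <= n)%nat -> b n <= eta) ->
  exists c, forall n, (n0 <= n)%nat -> Rabs (u n - c) <= b n.
Proof.
  intros Hu Hb.
  assert (Hc : Cauchy_crit u).
  { intros eta Heta. destruct (Hb (eta / 2) ltac:(lra)) as [N HN]. exists (max N n0).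
    intros n m Hn Hm. unfold Rdist. destruct (Nat.le_ge_cases n m).
    - rewrite Rabs_minus_sym. specialize (Hu n m ltac:(lia)). specialize (HN n ltac:(lia)). lra.
    - specialize (Hu m n ltac:(lia)). specialize (HN m ltac:(lia)). lra. }
  destruct (R_complete u Hc) as [c Hcv]. exists c. intros n Hn.
  apply Rle_plus_epsilon. intros eta Heta.
  destruct (Hcv eta Heta) as [N HN]. specialize (HN (max N n) ltac:(lia)). unfold Rdist in HN.
  specialize (Hu n (max N n) ltac:(lia)).
  replace (u n - c) with ((u (max N n) - c) - (u (max N n) - u n)) by ring.
  eapply Rle_trans; [apply Rabs_triang |]. rewrite Rabs_Ropp. lra.
Qed.

Lemma cauchy_bound_limit_R (Phi B : R -> R) x0 : 0 <= x0 ->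
  (forall x y, x0 <= x <= y -> Rabs (Phi y - Phi x) <= B x) ->
  (forall eta, 0 < eta -> exists X, forall x, X <= x -> B x <= eta) ->
  exists c, forall x, x0 <= x -> Rabs (Phi x - c) <= B x.
Proof.
  intros Hx0 HP HB.
  destruct (cauchy_bound_limit (fun n => Phi (x0 + INR n)) (fun n => B (x0 + INR n)) 0)
    as [c Hc].
  { intros n m Hnm. apply HP. pose proof (pos_INR n). pose proof (le_INR n m ltac:(lia)). lra. }
  { intros eta Heta. destruct (HB eta Heta) as [X HX]. destruct (nat_above X) as [N HN].
    exists N. intros n Hn. apply HX. apply le_INR in Hn. pose proof (pos_INR N). lra. }
  exists c. intros x Hx. apply Rle_plus_epsilon. intros eta Heta.
  destruct (HB eta Heta) as [X HX]. destruct (nat_above (Rmax X x)) as [N HN].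
  pose proof (Rmax_l X x). pose proof (Rmax_r X x). pose proof (pos_INR N).
  specialize (Hc N ltac:(lia)). specialize (HX (x0 + INR N) ltac:(lra)).
  specialize (HP x (x0 + INR N) ltac:(lra)).
  replace (Phi x - c) with ((Phi (x0 + INR N) - c) - (Phi (x0 + INR N) - Phi x)) by ring.
  eapply Rle_trans; [apply Rabs_triang |]. rewrite Rabs_Ropp. lra.
Qed.

Lemma Un_cv_Rabs_affine_le (u : nat -> R) l al be R0 N0 : Un_cv u l ->
  (forall N, (N0 <= N)%nat -> Rabs (al + be * u N) <= R0) -> Rabs (al + be * l) <= R0.
Proof.
  intros Hu H. apply Rle_plus_epsilon. intros eta Heta.
  destruct (Hu (eta / (Rabs be + 1))) as [N HN];
    [apply Rdiv_lt_0_compat; [| pose proof (Rabs_pos be)]; lra |].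
  specialize (HN (max N N0) ltac:(lia)). specialize (H (max N N0) ltac:(lia)).
  unfold Rdist in HN.
  replace (al + be * l) with ((al + be * u (max N N0)) - be * (u (max N N0) - l)) by ring.
  eapply Rle_trans; [apply Rabs_triang |]. rewrite Rabs_Ropp, Rabs_mult.
  assert (Rabs be * Rabs (u (max N N0) - l) <= eta).
  { pose proof (Rabs_pos be). pose proof (Rabs_pos (u (max N N0) - l)).
    apply Rle_trans with ((Rabs be + 1) * (eta / (Rabs be + 1))); [nra | right; field; lra]. }
  lra.
Qed.

Lemma Rpower_neg_eventually_le g K : g < 0 -> forall eta, 0 < eta ->
  exists X, 1 <= X /\ forall x, X <= x -> K * Rpower x g <= eta.
Proof.
  intros Hg eta Heta. destruct (Rle_dec K 0) as [HK | HK].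
  - exists 1. split; [lra |]. intros x Hx. pose proof (Rpower_pos x g). nra.
  - set (X0 := Rpower (eta / K) (/ g)). exists (Rmax 1 X0). split; [apply Rmax_l |].
    intros x Hx. pose proof (Rmax_l 1 X0). pose proof (Rmax_r 1 X0).
    assert (Rpower x g <= Rpower X0 g)
      by (apply Rpower_anti_base; [lra | split; [apply Rpower_pos | lra]]).
    unfold X0 in *.
    rewrite Rpower_mult, Rinv_l, Rpower_1 in H1 by (lra || apply Rdiv_lt_0_compat; lra).
    apply Rmult_le_reg_r with (/ K); [apply Rinv_0_lt_compat; lra |].
    rewrite Rmult_comm, <- Rmult_assoc, Rinv_l, Rmult_1_l by lra. auto.
Qed.

(** * Sums of [m ^ g]: Euler-Maclaurin to first order *)

Definition floorN (x : R) : nat := Z.to_nat (Int_part x).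

Lemma floorN_spec x : 0 <= x -> INR (floorN x) <= x < INR (floorN x) + 1.
Proof.
  intros Hx. pose proof (base_Int_part x) as [H1 H2]. unfold floorN.
  assert (0 <= Int_part x)%Z.
  { destruct (Z_le_gt_dec 0 (Int_part x)); auto.
    assert (Int_part x <= -1)%Z by lia. apply IZR_le in H. lra. }
  rewrite INR_IZR_INZ, Z2Nat.id by auto. lra.
Qed.

Lemma floorN_unique x k : INR k <= x < INR k + 1 -> floorN x = k.
Proof.
  intros [H1 H2]. unfold floorN, Int_part.
  assert (Z.of_nat k + 1 = up x)%Z
    by (apply tech_up; rewrite plus_IZR, <- INR_IZR_INZ; simpl; lra).
  rewrite <- H. lia.
Qed.

Lemma floorN_div x d : 0 <= x -> (1 <= d)%nat -> floorN (x / INR d) = (floorN x / d)%nat.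
Proof.
  intros Hx Hd. pose proof (floorN_spec x Hx) as [H1 H2]. set (n := floorN x) in *.
  assert (Hdp : 0 < INR d) by (apply lt_0_INR; lia).
  pose proof (Nat.div_mod_eq n d) as Hdm. pose proof (Nat.mod_upper_bound n d ltac:(lia)) as Hb.
  apply floorN_unique. set (q := (n / d)%nat) in *. set (r := (n mod d)%nat) in *.
  assert (HnR : INR n = INR d * INR q + INR r)
    by (rewrite Hdm at 1; rewrite plus_INR, mult_INR; auto).
  assert (HrR : INR r + 1 <= INR d) by (rewrite <- S_INR; apply le_INR; lia).
  pose proof (pos_INR r).
  assert (Hx' : x / INR d * INR d = x) by (field; lra).
  split; apply Rmult_le_reg_r with (INR d) || apply Rmult_lt_reg_r with (INR d); nra.
Qed.

Lemma floorN_ge1 x : 1 <= x -> (1 <= floorN x)%nat.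
Proof.
  intros H. pose proof (floorN_spec x ltac:(lra)) as [H1 H2].
  destruct (floorN x); [simpl in *; lra | lia].
Qed.

Lemma sum_le_INR n f : sum_le (INR n) f = sum1 n f.
Proof. unfold sum_le. rewrite Int_part_INR, Nat2Z.id. auto. Qed.

Lemma MVT_Mfun g u v : 0 < u < v ->
  exists xi, u < xi < v /\ Mfun g v - Mfun g u = Rpower xi g * (v - u).
Proof.
  intros Huv. unfold Mfun. destruct (Req_EM_T g (-1)) as [-> | Hg].
  - destruct (MVT_ln u v Huv) as [xi [Hxi Heq]]. exists xi. split; auto.
    replace (-1) with (- (1)) by ring. rewrite Heq, Rpower_Ropp, Rpower_1; lra.
  - destruct (MVT_Rpower u v (g + 1) Huv) as [xi [Hxi Heq]]. exists xi. split; auto.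
    replace (g + 1 - 1) with g in Heq by ring.
    unfold Rdiv. rewrite <- Rmult_minus_distr_r, Heq. field. intro; apply Hg; lra.
Qed.

Lemma Mfun_diff_le g u v : 1 <= u <= v -> v <= 2 * u ->
  Rabs (Mfun g v - Mfun g u) <= Rpower 2 (Rabs g) * Rpower u g * (v - u).
Proof.
  intros Hu Hv. destruct (Req_dec u v) as [<- | Hne].
  - rewrite !Rminus_diag, Rabs_R0, Rmult_0_r. lra.
  - destruct (MVT_Mfun g u v ltac:(lra)) as [xi [Hxi Heq]].
    rewrite Heq, Rabs_mult, (Rabs_right (Rpower xi g)), (Rabs_right (v - u))
      by (lra || apply Rle_ge, Rlt_le, Rpower_pos).
    destruct (Rpower_ratio_le u xi g ltac:(lra) ltac:(lra)) as [H1 _].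
    apply Rmult_le_compat_r; lra.
Qed.

Definition power_sum_rem (g t : R) : R := sum_le t (fun m => Rpower (INR m) g) - Mfun g t.

Lemma power_sum_rem_step g n : (1 <= n)%nat ->
  Rabs (power_sum_rem g (INR (S n)) - power_sum_rem g (INR n))
  <= Rabs g * Rpower 2 (Rabs (g - 1)) * Rpower (INR (S n)) (g - 1).
Proof.
  intros Hn. unfold power_sum_rem. rewrite !sum_le_INR. cbn [sum1]. rewrite S_INR.
  assert (HnR : 1 <= INR n) by (apply (le_INR 1); auto).
  destruct (MVT_Mfun g (INR n) (INR n + 1) ltac:(lra)) as [xi [Hxi Heq]].
  match goal with |- Rabs ?d <= _ =>
    replace d with (Rpower (INR n + 1) g - (Mfun g (INR n + 1) - Mfun g (INR n))) by ring end.
  rewrite Heq. replace (INR n + 1 - INR n) with 1 by ring. rewrite Rmult_1_r.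
  destruct (MVT_Rpower xi (INR n + 1) g ltac:(lra)) as [eta [Heta Heq2]]. rewrite Heq2.
  rewrite !Rabs_mult, (Rabs_right (Rpower eta (g - 1))), (Rabs_right (INR n + 1 - xi))
    by (lra || apply Rle_ge, Rlt_le, Rpower_pos).
  destruct (Rpower_ratio_le eta (INR n + 1) (g - 1) ltac:(lra) ltac:(lra)) as [_ H2].
  pose proof (Rabs_pos g). pose proof (Rpower_pos eta (g - 1)).
  assert (Rabs g * Rpower eta (g - 1) * (INR n + 1 - xi) <= Rabs g * Rpower eta (g - 1) * 1)
    by (apply Rmult_le_compat_l; nra).
  assert (Rabs g * Rpower eta (g - 1) <=
          Rabs g * (Rpower 2 (Rabs (g - 1)) * Rpower (INR n + 1) (g - 1)))
    by (apply Rmult_le_compat_l; lra).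
  nra.
Qed.

Lemma Rpower_pred_le g m : g <> 0 -> (2 <= m)%nat ->
  Rpower (INR m) (g - 1)
  <= Rpower 2 (Rabs (g - 1)) * ((Rpower (INR m) g - Rpower (INR (m - 1)) g) / g).
Proof.
  intros Hg Hm. assert (Hm1 : INR (m - 1) = INR m - 1) by (rewrite minus_INR by lia; simpl; ring).
  assert (HmR : 2 <= INR m) by (apply (le_INR 2); auto). rewrite Hm1.
  destruct (MVT_Rpower (INR m - 1) (INR m) g ltac:(lra)) as [xi [Hxi Heq]].
  rewrite Heq. replace (INR m - (INR m - 1)) with 1 by ring.
  replace (g * Rpower xi (g - 1) * 1 / g) with (Rpower xi (g - 1)) by (field; auto).
  apply (Rpower_ratio_le xi (INR m) (g - 1)); lra.
Qed.

Lemma sum1_Rpower_diff_le g n n' : g <> 0 -> (1 <= n <= n')%nat ->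
  sum1 n' (fun m => Rpower (INR m) (g - 1)) - sum1 n (fun m => Rpower (INR m) (g - 1))
  <= Rpower 2 (Rabs (g - 1)) * ((Rpower (INR n') g - Rpower (INR n) g) / g).
Proof.
  intros Hg [Hn Hn']. induction Hn'.
  - rewrite !Rminus_diag. unfold Rdiv. rewrite Rmult_0_l, Rmult_0_r. lra.
  - cbn [sum1]. pose proof (Rpower_pred_le g (S m) Hg ltac:(lia)).
    replace (S m - 1)%nat with m in H by lia.
    assert (Hd : forall a b c, a * ((b - c) / g) = a * (b / g) - a * (c / g))
      by (intros; field; auto).
    rewrite Hd in *. lra.
Qed.

Definition power_sum_rem_const (g : R) : R :=
  Rabs g * Rpower 2 (Rabs (g - 1)) * Rpower 2 (Rabs (g - 1)).

Lemma power_sum_rem_const_ge0 g : 0 <= power_sum_rem_const g.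
Proof.
  unfold power_sum_rem_const. pose proof (Rabs_pos g). pose proof (Rpower_pos 2 (Rabs (g - 1))).
  apply Rmult_le_pos; [apply Rmult_le_pos |]; lra.
Qed.

Lemma power_sum_rem_diff_le g : g <> 0 -> forall n m, (1 <= n <= m)%nat ->
  Rabs (power_sum_rem g (INR m) - power_sum_rem g (INR n))
  <= power_sum_rem_const g * ((Rpower (INR m) g - Rpower (INR n) g) / g).
Proof.
  intros Hg n m Hnm. unfold power_sum_rem_const. set (A := Rabs g * Rpower 2 (Rabs (g - 1))).
  assert (HA : 0 <= A)
    by (unfold A; pose proof (Rabs_pos g); pose proof (Rpower_pos 2 (Rabs (g - 1))); nra).
  apply Rle_trans with
    (A * (sum1 m (fun k => Rpower (INR k) (g - 1)) - sum1 n (fun k => Rpower (INR k) (g - 1)))).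
  - destruct Hnm as [Hn Hm]. induction Hm.
    + rewrite !Rminus_diag, Rabs_R0, Rmult_0_r. lra.
    + pose proof (power_sum_rem_step g m ltac:(lia)). cbn [sum1].
      match goal with |- Rabs (?a - ?b) <= _ =>
        replace (a - b) with ((a - power_sum_rem g (INR m)) + (power_sum_rem g (INR m) - b))
          by ring end.
      eapply Rle_trans; [apply Rabs_triang |]. fold A in H. lra.
  - rewrite Rmult_assoc. apply Rmult_le_compat_l; auto. apply sum1_Rpower_diff_le; auto.
Qed.

Lemma power_sum_rem_0 n : (1 <= n)%nat -> power_sum_rem 0 (INR n) = 0.
Proof.
  intros Hn. unfold power_sum_rem, Mfun. rewrite sum_le_INR.
  destruct (Req_EM_T 0 (-1)); [lra |]. rewrite Rplus_0_l, Rpower_1 by (apply lt_0_INR; lia).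
  assert (Hs : forall k, sum1 k (fun m => Rpower (INR m) 0) = INR k).
  { induction k; simpl sum1; [reflexivity |].
    rewrite IHk, S_INR. unfold Rpower. rewrite Rmult_0_l, exp_0. ring. }
  rewrite Hs. field.
Qed.

Lemma power_sum_rem_pos_int g : 0 < g ->
  exists K, 0 <= K /\
    forall n, (1 <= n)%nat -> Rabs (power_sum_rem g (INR n)) <= K * Rpower (INR n) g.
Proof.
  intros Hg. set (A := power_sum_rem_const g).
  assert (HA : 0 <= A / g)
    by (apply Rmult_le_pos; [apply power_sum_rem_const_ge0 | apply Rlt_le, Rinv_0_lt_compat; lra]).
  set (D1 := power_sum_rem g (INR 1)).
  exists (Rabs D1 + A / g). split; [pose proof (Rabs_pos D1); lra |]. intros n Hn.
  pose proof (power_sum_rem_diff_le g ltac:(lra) 1 n ltac:(lia)) as Hd. fold A D1 in Hd.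
  simpl INR in Hd. rewrite Rpower_1_base in Hd.
  assert (H1n : 1 <= Rpower (INR n) g) by (apply Rpower_ge1; [apply (le_INR 1) |]; lia || lra).
  replace (power_sum_rem g (INR n)) with (D1 + (power_sum_rem g (INR n) - D1)) by ring.
  eapply Rle_trans; [apply Rabs_triang |].
  assert (A * ((Rpower (INR n) g - 1) / g) <= A / g * Rpower (INR n) g).
  { unfold Rdiv. rewrite (Rmult_comm (Rpower (INR n) g - 1)), <- Rmult_assoc.
    apply Rmult_le_compat_l; [exact HA | lra]. }
  pose proof (Rabs_pos D1). nra.
Qed.

(* For [g < 0] the remainder converges, to [zeta(-g)] (Euler's constant when [g = -1]). *)
Lemma power_sum_rem_neg_int g : g < 0 -> exists c K, 0 <= K /\
  forall n, (1 <= n)%nat -> Rabs (power_sum_rem g (INR n) - c) <= K * Rpower (INR n) g.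
Proof.
  intros Hg. set (A := power_sum_rem_const g). pose proof (power_sum_rem_const_ge0 g) as HA.
  set (K := A / - g).
  assert (HK : 0 <= K) by (unfold K; apply Rmult_le_pos; auto; apply Rlt_le, Rinv_0_lt_compat; lra).
  destruct (cauchy_bound_limit (fun n => power_sum_rem g (INR n))
              (fun n => K * Rpower (INR n) g) 1) as [c Hc].
  - intros n m Hnm. eapply Rle_trans; [apply power_sum_rem_diff_le; auto; lra |]. fold A.
    replace (A * ((Rpower (INR m) g - Rpower (INR n) g) / g))
      with (K * (Rpower (INR n) g - Rpower (INR m) g)) by (unfold K; field; lra).
    apply Rmult_le_compat_l; auto. pose proof (Rpower_pos (INR m) g).
    assert (Rpower (INR m) g <= Rpower (INR n) g)
      by (apply Rpower_anti_base; [lra | split; [apply lt_0_INR | apply le_INR]; lia]).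
    lra.
  - intros eta Heta. destruct (Rpower_neg_eventually_le g K Hg eta Heta) as [X [HX1 HX]].
    destruct (nat_above X) as [N HN]. exists N. intros n Hn. apply HX. apply le_INR in Hn. lra.
  - exists c, K. auto.
Qed.

Lemma power_sum_rem_int g : exists c K, 0 <= K /\ (0 <= g -> c = 0) /\
  forall n, (1 <= n)%nat -> Rabs (power_sum_rem g (INR n) - c) <= K * Rpower (INR n) g.
Proof.
  destruct (Rtotal_order g 0) as [Hg | [-> | Hg]].
  - destruct (power_sum_rem_neg_int g Hg) as [c [K [HK H]]]. exists c, K. repeat split; auto; lra.
  - exists 0, 0. split; [lra | split; auto]. intros n Hn.
    rewrite power_sum_rem_0, Rminus_0_r, Rabs_R0 by auto. lra.
  - destruct (power_sum_rem_pos_int g Hg) as [K [HK H]]. exists 0, K. repeat split; auto.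
    intros n Hn. rewrite Rminus_0_r. auto.
Qed.

Lemma power_sum_rem_real g : exists c K, 0 <= K /\ (0 <= g -> c = 0) /\
  forall t, 1 <= t -> Rabs (power_sum_rem g t - c) <= K * Rpower t g.
Proof.
  destruct (power_sum_rem_int g) as [c [K0 [HK0 [Hc HD]]]].
  set (P := Rpower 2 (Rabs g)). assert (HP : 1 <= P) by (apply Rpower_ge1; [lra | apply Rabs_pos]).
  exists c, ((K0 + P) * P). split; [nra |]. split; auto. intros t Ht.
  pose proof (floorN_spec t ltac:(lra)) as [H1 H2]. pose proof (floorN_ge1 t Ht) as Hn.
  set (n := floorN t) in *. assert (HnR : 1 <= INR n) by (apply (le_INR 1); auto).
  specialize (HD n Hn).
  replace (power_sum_rem g t - c)
    with ((power_sum_rem g (INR n) - c) - (Mfun g t - Mfun g (INR n)))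
    by (unfold power_sum_rem; rewrite sum_le_INR; unfold sum_le; fold (floorN t); fold n; ring).
  pose proof (Mfun_diff_le g (INR n) t ltac:(lra) ltac:(lra)). fold P in H.
  destruct (Rpower_ratio_le (INR n) t g ltac:(lra) ltac:(lra)) as [_ Hr]. fold P in Hr.
  pose proof (Rpower_pos (INR n) g). pose proof (Rpower_pos t g).
  assert (P * Rpower (INR n) g * (t - INR n) <= P * Rpower (INR n) g * 1)
    by (apply Rmult_le_compat_l; nra).
  eapply Rle_trans; [apply Rabs_triang |]. rewrite Rabs_Ropp.
  assert ((K0 + P) * Rpower (INR n) g <= (K0 + P) * (P * Rpower t g))
    by (apply Rmult_le_compat_l; lra).
  nra.
Qed.

Lemma Mfun_lt1_le g : exists K, 0 <= K /\ forall t eps, 0 < t < 1 -> 0 <= eps <= 1/2 ->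
  Rabs (Mfun g t) <= K * Rpower t (g + eps).
Proof.
  assert (Hi : 0 <= / Rabs (g + 1)).
  { destruct (Req_dec (g + 1) 0) as [E | E]; [rewrite E, Rabs_R0, Rinv_0; lra |].
    apply Rlt_le, Rinv_0_lt_compat, Rabs_pos_lt; auto. }
  exists (2 + / Rabs (g + 1)). split; [lra |]. intros t eps Ht Heps.
  pose proof (Rpower_pos t (g + eps)). unfold Mfun. destruct (Req_EM_T g (-1)) as [-> | Eg].
  - (* [|ln t| = ln (1/t) <= 2 t^(-1/2) <= 2 t^(-1+eps)] *)
    rewrite Rabs_left1 by (rewrite <- ln_1; apply ln_le; lra).
    assert (Hinv : 1 <= / t)
      by (apply Rmult_le_reg_r with t; [lra | rewrite Rinv_l; lra]).
    pose proof (ln_le_Rpower_div (/ t) (1/2) Hinv ltac:(lra)) as Hln.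
    rewrite ln_Rinv, Rpower_inv_base, <- Rpower_Ropp in Hln by lra.
    assert (Rpower t (- (1/2)) <= Rpower t (-1 + eps)) by (apply Rpower_anti_exp; lra).
    assert (0 <= / Rabs (-1 + 1) * Rpower t (-1 + eps)) by nra.
    replace (Rpower t (- (1 / 2)) / (1 / 2)) with (2 * Rpower t (- (1/2))) in Hln by field. nra.
  - assert (Hg1 : g + 1 <> 0) by (intro; apply Eg; lra).
    unfold Rdiv. rewrite Rabs_mult, Rabs_inv, (Rabs_right (Rpower t (g + 1)))
      by (auto || apply Rle_ge, Rlt_le, Rpower_pos).
    assert (Rpower t (g + 1) <= Rpower t (g + eps)) by (apply Rpower_anti_exp; lra).
    assert (Rpower t (g + 1) * / Rabs (g + 1) <= / Rabs (g + 1) * Rpower t (g + eps))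
      by (rewrite Rmult_comm; apply Rmult_le_compat_l; auto).
    nra.
Qed.

(* The constant [c] only enters once [t >= 1]: below 1 the sum is empty. *)
Lemma power_sum_rem_le g : exists c K, 0 <= K /\ (0 <= g -> c = 0) /\
  forall t eps, 0 < t -> 0 <= eps <= 1/2 ->
  Rabs (power_sum_rem g t - (if Rle_dec 1 t then c else 0)) <= K * Rpower t (g + eps).
Proof.
  destruct (power_sum_rem_real g) as [c [K0 [HK0 [Hc HD]]]].
  destruct (Mfun_lt1_le g) as [K1 [HK1 HM]].
  exists c, (K0 + K1). split; [lra |]. split; auto. intros t eps Ht Heps.
  pose proof (Rpower_pos t (g + eps)).
  destruct (Rle_dec 1 t) as [H1 | H1].
  - specialize (HD t H1). assert (Rpower t g <= Rpower t (g + eps)) by (apply Rle_Rpower; lra).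
    assert (K0 * Rpower t g <= K0 * Rpower t (g + eps)) by (apply Rmult_le_compat_l; lra). nra.
  - unfold power_sum_rem, sum_le. fold (floorN t).
    rewrite (floorN_unique t 0) by (simpl; lra). simpl sum1.
    rewrite Rminus_0_r, Rminus_0_l, Rabs_Ropp.
    specialize (HM t eps ltac:(lra) Heps). nra.
Qed.

Definition Jsum (e : list Z) (beta x : R) : R :=
  sum_le x (fun n => JordanQ e n * Rpower (INR n) beta).

Lemma JordanQ_Jratio e beta n : (1 <= n)%nat ->
  JordanQ e n * Rpower (INR n) beta = Jratio e n * Rpower (INR n) (beta + IZR (weight e)).
Proof.
  intros Hn. assert (Hx : 0 < INR n) by (apply lt_0_INR; lia). unfold Jratio.
  rewrite powerRZ_Rpower, opp_IZR, Rpower_Ropp, Rpower_plus by auto.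
  field. apply Rgt_not_eq, Rpower_pos.
Qed.

Lemma Jsum_sum_sublists e beta x N : 0 <= x -> (floorN x <= N)%nat ->
  let g := beta + IZR (weight e) in
  Jsum e beta x = sum_sublists (primes_upto N) (fun S => hcoef e S * Rpower (INR (listprodn S)) g *
      sum_le (x / INR (listprodn S)) (fun m => Rpower (INR m) g)).
Proof.
  intros Hx HN g. unfold Jsum, sum_le. fold (floorN x).
  rewrite (sum1_ext _ _ (fun n => Jratio e n * Rpower (INR n) g))
    by (intros; apply JordanQ_Jratio; lia).
  rewrite (sum1_Jratio_mul_expand e (floorN x) N) by
    (auto; intros a b Ha Hb; rewrite mult_INR, Rpower_mult_distr; auto; apply lt_0_INR; lia).
  apply sum_sublists_ext. intros S HS. f_equal. fold (floorN (x / INR (listprodn S))).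
  rewrite floorN_div; auto. eapply sublist_primes_listprodn_ge1; eauto.
Qed.

(* The correction from rescaling [M_{-1} = ln], which is not homogeneous. *)
Definition log_term (g d : R) : R := if Req_EM_T g (-1) then ln d / d else 0.

Lemma Mfun_scale g x d : 0 < x -> 0 < d ->
  Rpower d g * Mfun g (x / d) = Mfun g x / d - log_term g d.
Proof.
  intros Hx Hd. unfold Mfun, log_term. destruct (Req_EM_T g (-1)) as [-> | Hg].
  - replace (-1) with (- (1)) by ring. rewrite Rpower_Ropp, Rpower_1 by auto.
    unfold Rdiv. rewrite ln_mult, ln_Rinv by (auto; apply Rinv_0_lt_compat; auto). field; lra.
  - assert (g + 1 <> 0) by (intro; apply Hg; lra).
    rewrite Rpower_div_base, !Rpower_plus, !Rpower_1 by auto.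
    pose proof (Rpower_pos d g). field. repeat split; lra.
Qed.

Lemma power_sum_rem_scaled_le g c K0 x d eps : 1 <= x -> 1 <= d -> 0 <= K0 -> 0 < eps <= 1/2 ->
  (c <> 0 -> g + eps <= 0) ->
  (forall t, 0 < t -> Rabs (power_sum_rem g t - (if Rle_dec 1 t then c else 0))
                      <= K0 * Rpower t (g + eps)) ->
  Rabs (power_sum_rem g (x / d) - c) * Rpower d g
  <= (K0 + Rabs c) * Rpower x (g + eps) * Rpower d (- eps).
Proof.
  intros Hx Hd HK0 Heps Hc HR.
  assert (Hxd : 0 < x / d) by (apply Rdiv_lt_0_compat; lra).
  set (c' := if Rle_dec 1 (x / d) then c else 0).
  pose proof (Rpower_pos d g). pose proof (Rpower_pos d (- eps)).
  pose proof (Rpower_pos x (g + eps)).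
  assert (Hdg : Rpower d g = Rpower d (g + eps) * Rpower d (- eps))
    by (rewrite <- Rpower_plus; f_equal; ring).
  assert (E1 : Rpower (x / d) (g + eps) * Rpower d g = Rpower x (g + eps) * Rpower d (- eps)).
  { rewrite Rpower_div_base, Hdg by lra. field. apply Rgt_not_eq, Rpower_pos. }
  assert (B1 : Rabs (power_sum_rem g (x / d) - c') * Rpower d g
               <= K0 * (Rpower x (g + eps) * Rpower d (- eps))).
  { rewrite <- E1, <- Rmult_assoc. apply Rmult_le_compat_r; [lra | apply HR; auto]. }
  (* For [x < d] the constant is absent; then [c <> 0] forces [g + eps <= 0],
     whence [d^g <= x^(g+eps) d^-eps]. *)
  assert (B2 : Rabs (c' - c) * Rpower d g <= Rabs c * (Rpower x (g + eps) * Rpower d (- eps))).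
  { unfold c'. destruct (Rle_dec 1 (x / d)) as [Hle | Hle].
    - rewrite Rminus_diag, Rabs_R0, Rmult_0_l. apply Rmult_le_pos; [apply Rabs_pos | nra].
    - rewrite Rminus_0_l, Rabs_Ropp. destruct (Req_dec c 0) as [E | E];
        [rewrite E, Rabs_R0; lra |].
      apply Rmult_le_compat_l; [apply Rabs_pos |].
      assert (Hxd1 : x <= d).
      { apply Rnot_le_lt in Hle. apply Rmult_lt_compat_r with (r := d) in Hle; [| lra].
        unfold Rdiv in Hle. rewrite Rmult_assoc, Rinv_l, Rmult_1_l, Rmult_1_r in Hle by lra. lra. }
      rewrite Hdg. apply Rmult_le_compat_r; [lra | apply Rpower_anti_base; auto; lra]. }
  replace (power_sum_rem g (x / d) - c) with
    ((power_sum_rem g (x / d) - c') + (c' - c)) by ring.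
  eapply Rle_trans; [apply Rmult_le_compat_r; [lra | apply Rabs_triang] |]. lra.
Qed.

Lemma divisor_term_le g c K0 x d eps h : 1 <= x -> 1 <= d -> 0 <= K0 -> 0 < eps <= 1/2 ->
  (c <> 0 -> g + eps <= 0) ->
  (forall t, 0 < t -> Rabs (power_sum_rem g t - (if Rle_dec 1 t then c else 0))
                      <= K0 * Rpower t (g + eps)) ->
  Rabs (h * Rpower d g * sum_le (x / d) (fun m => Rpower (INR m) g) - Mfun g x * (h / d)
        - h * (c * Rpower d g - log_term g d))
  <= (K0 + Rabs c) * Rpower x (g + eps) * (Rabs h * Rpower d (- eps)).
Proof.
  intros Hx Hd HK0 Heps Hc HR.
  pose proof (power_sum_rem_scaled_le g c K0 x d eps Hx Hd HK0 Heps Hc HR) as Hkey.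
  assert (Hxd : 0 < x / d) by (apply Rdiv_lt_0_compat; lra).
  replace (h * Rpower d g * sum_le (x / d) (fun m => Rpower (INR m) g) - Mfun g x * (h / d)
           - h * (c * Rpower d g - log_term g d))
    with (h * Rpower d g * (power_sum_rem g (x / d) - c)
          + h * (Rpower d g * Mfun g (x / d) - (Mfun g x / d - log_term g d)))
    by (unfold power_sum_rem; field; lra).
  rewrite Mfun_scale, Rminus_diag, Rmult_0_r, Rplus_0_r by lra.
  rewrite !Rabs_mult, (Rabs_right (Rpower d g)) by (apply Rle_ge, Rlt_le, Rpower_pos).
  rewrite Rmult_assoc, (Rmult_comm (Rpower d g)).
  replace ((K0 + Rabs c) * Rpower x (g + eps) * (Rabs h * Rpower d (- eps)))
    with (Rabs h * ((K0 + Rabs c) * Rpower x (g + eps) * Rpower d (- eps))) by ring.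
  apply Rmult_le_compat_l; [apply Rabs_pos | exact Hkey].
Qed.

(* Truncating the Euler product at any [N >= x]: the error is [x^(g+eps)] times the
   Rankin sum [sum_d |h(d)| d^-eps << eps^-|e_1|]; [Z N] collects the constant terms. *)
Lemma Jsum_truncated_asymptotic e beta :
  let g := beta + IZR (weight e) in let a := Z.abs_nat (ecoef e 1) in
  exists K (Z : nat -> R), 0 <= K /\ (0 <= g -> forall N, Z N = 0) /\
  forall x N eps, 1 <= x -> (floorN x <= N)%nat -> 0 < eps <= 1/2 -> (g < 0 -> g + eps <= 0) ->
  Rabs (Jsum e beta x - SingPartial e N * Mfun g x - Z N) <= K * Rpower x (g + eps) / eps ^ a.
Proof.
  intros g a. destruct (power_sum_rem_le g) as [c [K0 [HK0 [Hc HR]]]].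
  destruct (listprod_primes_local_factor_le e) as [K1 [HK1 HEuler]]. fold a in HEuler.
  exists ((K0 + Rabs c) * K1), (fun N => sum_sublists (primes_upto N)
      (fun S => hcoef e S * (c * Rpower (INR (listprodn S)) g - log_term g (INR (listprodn S))))).
  split; [pose proof (Rabs_pos c); nra |]. split.
  { intros Hg N. rewrite <- (sum_sublists_0 (primes_upto N)). apply sum_sublists_ext.
    intros S _. rewrite Hc by auto. unfold log_term.
    destruct (Req_EM_T g (-1)); [lra | ring]. }
  intros x N eps Hx HN Heps Hge.
  assert (Hcg : c <> 0 -> g + eps <= 0).
  { intros Hc0. apply Hge. destruct (Rlt_dec g 0); auto. exfalso; apply Hc0, Hc; lra. }
  rewrite (Jsum_sum_sublists e beta x N), SingPartial_sum_sublists by (lra || auto). fold g.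
  rewrite (Rmult_comm (sum_sublists _ _) (Mfun g x)), <- sum_sublists_scal, <- !sum_sublists_sub.
  eapply Rle_trans; [apply sum_sublists_abs |].
  eapply Rle_trans.
  { apply sum_sublists_le. intros S HS.
    apply (divisor_term_le g c K0 x (INR (listprodn S)) eps (hcoef e S)); auto; try lra.
    - apply (le_INR 1). eapply sublist_primes_listprodn_ge1; eauto.
    - intros t Ht. apply HR; auto; lra. }
  rewrite sum_sublists_scal, <- listprod_1add_sum_sublists.
  specialize (HEuler eps N ltac:(lra)).
  pose proof (Rpower_pos x (g + eps)). pose proof (Rabs_pos c).
  unfold Rdiv in *.
  replace ((K0 + Rabs c) * K1 * Rpower x (g + eps) * / eps ^ a)
    with ((K0 + Rabs c) * Rpower x (g + eps) * (K1 * / eps ^ a)) by ring.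
  apply Rmult_le_compat_l; [nra | lra].
Qed.

(* [eps ~ 1 / ln x] balances [x^eps <= e] against [eps^-a ~ (ln x)^a]. *)
Lemma rankin_eps_choice g a : exists K, 0 <= K /\ forall x, 2 <= x ->
  exists eps, 0 < eps <= 1/2 /\ (g < 0 -> g + eps <= 0) /\
    Rpower x (g + eps) / eps ^ a <= K * Rpower x g * ln x ^ a.
Proof.
  set (m0 := if Rlt_dec g 0 then - g else 1).
  assert (Hm0 : 0 < m0) by (unfold m0; destruct (Rlt_dec g 0); lra).
  set (C := 5 + 2 / m0).
  assert (HC : 5 <= C) by (unfold C; assert (0 < 2 / m0) by (apply Rdiv_lt_0_compat; lra); lra).
  exists (3 * C ^ a). split; [apply Rmult_le_pos; [lra | apply pow_le; lra] |].
  intros x Hx. assert (Hl : / 2 < ln x).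
  { pose proof ln_lt_2. pose proof (ln_le 2 x ltac:(lra) Hx). lra. }
  set (eps := Rmin (1/2) (Rmin (/ ln x) m0)).
  assert (He0 : / (C * ln x) <= eps).
  { unfold eps. repeat apply Rmin_glb.
    - replace (1/2) with (/ 2) by field. apply Rinv_le_contravar; nra.
    - apply Rinv_le_contravar; nra.
    - rewrite <- (Rinv_inv m0). apply Rinv_le_contravar; [apply Rinv_0_lt_compat; lra |].
      assert (/ m0 <= C * / 2) by (unfold C, Rdiv; nra).
      assert (C * / 2 <= C * ln x) by (apply Rmult_le_compat_l; lra). lra. }
  assert (He0pos : 0 < / (C * ln x)) by (apply Rinv_0_lt_compat; nra).
  exists eps. split; [split; [lra | apply Rmin_l] |]. split.
  { intros Hg. assert (eps <= m0) by (unfold eps; rewrite Rmin_assoc; apply Rmin_r).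
    unfold m0 in *. destruct (Rlt_dec g 0); lra. }
  assert (Hxe : Rpower x eps <= 3).
  { unfold Rpower. eapply Rle_trans; [| apply exp_le_3]. apply exp_le.
    assert (eps <= / ln x) by (unfold eps; eapply Rle_trans; [apply Rmin_r | apply Rmin_l]).
    apply Rmult_le_compat_r with (r := ln x) in H; [| lra]. rewrite Rinv_l in H by lra. lra. }
  assert (Hea : / eps ^ a <= C ^ a * ln x ^ a).
  { rewrite <- Rpow_mult_distr, <- (Rinv_inv (C * ln x)), pow_inv.
    apply Rinv_le_contravar; [apply pow_lt | apply pow_incr]; lra. }
  rewrite Rpower_plus. pose proof (Rpower_pos x g). pose proof (Rpower_pos x eps).
  assert (0 <= / eps ^ a) by (apply Rlt_le, Rinv_0_lt_compat, pow_lt; lra).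
  unfold Rdiv. replace (3 * C ^ a * Rpower x g * ln x ^ a)
    with (Rpower x g * (3 * (C ^ a * ln x ^ a))) by ring.
  rewrite !Rmult_assoc. apply Rmult_le_compat_l; [lra | apply Rmult_le_compat; lra].
Qed.

Lemma Rpower_neg_mul_ln_pow_eventually_le g a K : g < 0 -> forall eta, 0 < eta ->
  exists X, forall x, X <= x -> K * Rpower x g * ln x ^ a <= eta.
Proof.
  intros Hg eta Heta. set (d := - g / (2 * (INR a + 1))).
  assert (Hd : 0 < d) by (unfold d; apply Rdiv_lt_0_compat; pose proof (pos_INR a); lra).
  destruct (Rpower_neg_eventually_le (g / 2) (Rabs K / d ^ a) ltac:(lra) eta Heta)
    as [X [HX1 HX]].
  exists X. intros x Hx. specialize (HX x Hx).
  assert (Hln : 0 <= ln x) by (apply ln_ge0; lra).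
  assert (H1 : ln x ^ a <= Rpower x (d * INR a) / d ^ a).
  { rewrite <- Rpower_mult, Rpower_pow by (apply Rpower_pos || lra).
    unfold Rdiv. rewrite <- pow_inv, <- Rpow_mult_distr.
    apply pow_incr. split; auto. apply ln_le_Rpower_div; lra. }
  assert (H2 : Rpower x g * Rpower x (d * INR a) <= Rpower x (g / 2)).
  { rewrite <- Rpower_plus. apply Rle_Rpower; [lra |].
    assert (INR a * / (INR a + 1) <= 1).
    { pose proof (pos_INR a). apply Rmult_le_reg_r with (INR a + 1); [lra |].
      rewrite Rmult_assoc, Rinv_l; lra. }
    unfold d, Rdiv. rewrite Rinv_mult. pose proof (pos_INR a). nra. }
  pose proof (Rabs_pos K). pose proof (Rpower_pos x g). pose proof (pow_lt d a Hd).
  assert (0 <= / d ^ a) by (apply Rlt_le, Rinv_0_lt_compat; auto).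
  apply Rle_trans with (Rabs K * Rpower x g * ln x ^ a).
  { apply Rmult_le_compat_r; [apply pow_le; auto |].
    apply Rmult_le_compat_r; [lra | apply Rle_abs]. }
  apply Rle_trans with (Rabs K / d ^ a * Rpower x (g / 2)); auto.
  apply Rle_trans with (Rabs K * Rpower x g * (Rpower x (d * INR a) / d ^ a));
    [apply Rmult_le_compat_l; nra |].
  unfold Rdiv.
  replace (Rabs K * Rpower x g * (Rpower x (d * INR a) * / d ^ a))
    with (Rabs K * / d ^ a * (Rpower x g * Rpower x (d * INR a))) by ring.
  apply Rmult_le_compat_l; nra.
Qed.

Lemma Jsum_Se_Mfun_le_nonneg e beta Se : Un_cv (SingPartial e) Se ->
  let g := beta + IZR (weight e) in 0 <= g ->
  exists K, forall x, 2 <= x ->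
    Rabs (Jsum e beta x - Se * Mfun g x) <= K * Rpower x g * ln x ^ Z.abs_nat (ecoef e 1).
Proof.
  intros HSe g Hg. set (a := Z.abs_nat (ecoef e 1)).
  destruct (Jsum_truncated_asymptotic e beta) as [K [Zf [HK [HZ HM]]]]. fold g a in HM, HZ.
  destruct (rankin_eps_choice g a) as [K3 [HK3 Heps]].
  exists (K * K3). intros x Hx. destruct (Heps x Hx) as [eps [He1 [He2 He3]]].
  replace (Jsum e beta x - Se * Mfun g x) with (Jsum e beta x + - Mfun g x * Se) by ring.
  apply (Un_cv_Rabs_affine_le (SingPartial e) Se _ _ _ (floorN x) HSe). intros N HN.
  replace (Jsum e beta x + - Mfun g x * SingPartial e N)
    with (Jsum e beta x - SingPartial e N * Mfun g x - Zf N) by (rewrite HZ by auto; ring).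
  eapply Rle_trans; [apply HM; auto; lra |].
  unfold Rdiv in *. rewrite Rmult_assoc, !(Rmult_assoc K).
  apply Rmult_le_compat_l; auto.
Qed.

(* For [g < 0] the error terms at [x <= y] are both controlled by the choice of [eps] at [x],
   since then [y^(g+eps) <= x^(g+eps)]; the constants [Z N] cancel in the difference. *)
Lemma Jsum_Se_Mfun_diff_le_neg e beta Se : Un_cv (SingPartial e) Se ->
  let g := beta + IZR (weight e) in g < 0 ->
  exists K, forall x y, 2 <= x <= y ->
    Rabs ((Jsum e beta y - Se * Mfun g y) - (Jsum e beta x - Se * Mfun g x))
    <= K * Rpower x g * ln x ^ Z.abs_nat (ecoef e 1).
Proof.
  intros HSe g Hg. set (a := Z.abs_nat (ecoef e 1)).
  destruct (Jsum_truncated_asymptotic e beta) as [K [Zf [HK [_ HM]]]]. fold g a in HM.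
  destruct (rankin_eps_choice g a) as [K3 [HK3 Heps]].
  exists (2 * K * K3). intros x y Hxy.
  destruct (Heps x ltac:(lra)) as [eps [He1 [He2 He3]]]. specialize (He2 Hg).
  replace ((Jsum e beta y - Se * Mfun g y) - (Jsum e beta x - Se * Mfun g x))
    with ((Jsum e beta y - Jsum e beta x) + (Mfun g x - Mfun g y) * Se) by ring.
  apply (Un_cv_Rabs_affine_le (SingPartial e) Se _ _ _ (max (floorN x) (floorN y)) HSe).
  intros N HN.
  replace (Jsum e beta y - Jsum e beta x + (Mfun g x - Mfun g y) * SingPartial e N) with
    ((Jsum e beta y - SingPartial e N * Mfun g y - Zf N)
     - (Jsum e beta x - SingPartial e N * Mfun g x - Zf N)) by ring.
  eapply Rle_trans; [apply Rabs_triang |]. rewrite Rabs_Ropp.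
  pose proof (HM y N eps ltac:(lra) ltac:(lia) He1 (fun _ => He2)) as Hy.
  pose proof (HM x N eps ltac:(lra) ltac:(lia) He1 (fun _ => He2)) as Hx.
  assert (Rpower y (g + eps) <= Rpower x (g + eps)) by (apply Rpower_anti_base; lra).
  assert (0 < / eps ^ a) by (apply Rinv_0_lt_compat, pow_lt; lra).
  assert (K * Rpower y (g + eps) / eps ^ a <= K * Rpower x (g + eps) / eps ^ a)
    by (unfold Rdiv; apply Rmult_le_compat_r; [lra | apply Rmult_le_compat_l; auto]).
  assert (K * Rpower x (g + eps) / eps ^ a <= K * (K3 * Rpower x g * ln x ^ a))
    by (unfold Rdiv in *; rewrite Rmult_assoc; apply Rmult_le_compat_l; auto).
  lra.
Qed.

Theorem mainTheorem5 (e : list Z) (beta : R) (Se : R)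
  (HSe : Un_cv (SingPartial e) Se) :
  exists C K : R, forall x : R, 2 <= x ->
    Rabs (sum_le x (fun n => JordanQ e n * Rpower (INR n) beta)
          - Se * Mfun (beta + IZR (weight e)) x - C)
    <= K * Rpower x (beta + IZR (weight e)) * ln x ^ Z.abs_nat (ecoef e 1).
Proof.
  set (g := beta + IZR (weight e)). set (a := Z.abs_nat (ecoef e 1)).
  change (sum_le ?x (fun n => JordanQ e n * Rpower (INR n) beta)) with (Jsum e beta x).
  destruct (Rle_dec 0 g) as [Hg | Hg].
  - destruct (Jsum_Se_Mfun_le_nonneg e beta Se HSe Hg) as [K HK].
    exists 0, K. intros x Hx. rewrite Rminus_0_r. apply HK; auto.
  - apply Rnot_le_lt in Hg.
    destruct (Jsum_Se_Mfun_diff_le_neg e beta Se HSe Hg) as [K HK].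
    destruct (cauchy_bound_limit_R (fun x => Jsum e beta x - Se * Mfun g x)
                (fun x => K * Rpower x g * ln x ^ a) 2) as [C HC]; [lra | exact HK | |].
    + intros eta Heta. apply Rpower_neg_mul_ln_pow_eventually_le; auto.
    + exists C, K. exact HC.
Qed.
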